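(* Let $K$ be a sequence of positive integers with $K_n=ab^n(1+o(1))$, where $a,b$ are positive reals with $\log_\phi b$ irrational. Then $\{\mathfrak F^{-1}(K_n)\}$ is equidistributed, and for every integer $s\ge2$ and $\mathbf b\in\mathcal F_s$, $$\lim_{n\to\infty}\frac{\#\{k\le n:\mathrm{LB}_s(K_k)=\mathbf b\}}{n}=\log_\phi\frac{\widetilde{\mathbf b}\cdot\widehat F}{\mathbf b\cdot\widehat F}.$$
   Context: $F$: $F_1=1,F_2=2,F_{n+2}=F_{n+1}+F_n$. Zeckendorf expansion $m=\sum_{k=1}^M\epsilon(k)F_{M-k+1}$ (unique, $\epsilon(k)\in\{0,1\}$, $\epsilon(1)=1$, $\epsilon(k)\epsilon(k+1)=0$); $\mathrm{LB}_s(m)=(\epsilon(1),\dots,\epsilon(s))$ if $M\ge s$. $\mathcal F_s$: all $\mathrm{LB}_s(m)$, listed $\mathbf b_1,\dots,\mathbf b_\ell$ with $1+\mathbf b_k*F=\mathbf b_{k+1}*F$, $\mathbf b*F=\sum_k\mathbf b(k)F_{s-k+1}$; $\mathbf b_{\ell+1}:=(1,0,1,0,\dots,1,0,1,1)$ if $s$ even, $(1,0,1,0,\dots,1,1,0)$ if $s$ odd; $\widetilde{\mathbf b_k}=\mathbf b_{k+1}$. $\omega=\phi^{-1}$, $\mathbf b\cdot\widehat F=\sum_k\mathbf b(k)\omega^{k-1}$. $\mathfrak F(x)=\frac{\phi}{\sqrt5}(\phi^x+\phi^{-x}\cos(\pi x)\phi^{-2})$, increasing on $[1,\infty)$ with inverse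 $\mathfrak F^{-1}$. $\{x_n\}$ equidistributed means $\lim_n\#\{k\le n:\{x_k\}\le\beta\}/n=\beta$ for all $\beta\in[0,1]$. *)

From Stdlib Require Import Reals Lra Lia List QArith ClassicalEpsilon.
From Coquelicot Require Import Coquelicot.
Import ListNotations.
Open Scope R_scope.

(* Fibonacci numbers with F_1 = 1, F_2 = 2, F_{n+2} = F_{n+1} + F_n.
   (F_0 is never used; set to 1.) *)
Fixpoint fibF (n : nat) : nat :=
  match n with
  | O => 1
  | S O => 1
  | S (S O) => 2
  | S ((S (S _)) as m) => (fibF m + fibF (pred m))%nat
  end.

(* k-th entry of a 0/1 word, 1-based: b(k). *)
Definition bit (b : list bool) (k : nat) : nat :=
  if nth (k - 1) b false then 1%nat else 0%nat.

Definition dotF (b : list bool) : nat :=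
  fold_right Nat.add 0%nat
    (map (fun k => (bit b k * fibF (length b - k + 1))%nat) (seq 1 (length b))).

Definition no_consec (e : list bool) : Prop :=
  forall k, (1 <= k)%nat -> (k + 1 <= length e)%nat ->
    (bit e k * bit e (k + 1))%nat = 0%nat.

Definition zeck (m : nat) (e : list bool) : Prop :=
  (1 <= length e)%nat /\ bit e 1 = 1%nat /\ no_consec e /\ m = dotF e.

Definition LB (s m : nat) (b : list bool) : Prop :=
  exists e, zeck m e /\ (s <= length e)%nat /\ firstn s e = b.

Definition inFs (s : nat) (b : list bool) : Prop := exists m, LB s m b.

Fixpoint rep10 (j : nat) : list bool :=
  match j with O => [] | S j' => true :: false :: rep10 j' end.

Definition bspecial (s : nat) : list bool :=
  if Nat.even s then rep10 ((s - 2) / 2) ++ [true; true]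
  else rep10 ((s - 3) / 2) ++ [true; true; false].

Definition tilde (s : nat) (b : list bool) : list bool :=
  match excluded_middle_informative
          (exists c, inFs s c /\ dotF c = S (dotF b)) with
  | left H => proj1_sig (constructive_indefinite_description _ H)
  | right _ => bspecial s
  end.

Definition phi : R := (1 + sqrt 5) / 2.
Definition omega : R := / phi.

Definition dotHat (b : list bool) : R :=
  fold_right Rplus 0
    (map (fun k => INR (bit b k) * omega ^ (k - 1)) (seq 1 (length b))).

Definition logphi (x : R) : R := ln x / ln phi.

Definition frakF (x : R) : R :=
  phi / sqrt 5 * (Rpower phi x + Rpower phi (- x) * cos (PI * x) * Rpower phi (-2)).

(* Inverse of frakF restricted to [1, oo) (frakF is increasing there). *)
Definition frakFinv (y : R) : R :=
  epsilon (inhabits 0) (fun x => 1 <= x /\ frakF x = y).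

Definition ind (P : Prop) : R :=
  if excluded_middle_informative P then 1 else 0.

Fixpoint cnt (P : nat -> Prop) (n : nat) : R :=
  match n with O => 0 | S n' => cnt P n' + ind (P (S n)) end.

Definition equidistributed (x : nat -> R) : Prop :=
  forall beta, 0 <= beta <= 1 ->
    is_lim_seq (fun n => cnt (fun k => frac_part (x k) <= beta) n / INR n) beta.

(* Write the Zeckendorf expansion of m as a block B of s digits followed by j
   more digits.  For each j the integers with leading block B form an interval
   [V_B(j), V_B~(j)), where V_c(j) is the value of c followed by j zeros, and
   Binet's formula gives V_c(j) = (phi/sqrt 5) phi^(s+j) (c . Fhat) + O(s).  So
   on the scale y(m) = log_phi (m sqrt 5 / phi), LB_s(m) = B says that the
   fractional part of y(m) - log_phi (B . Fhat) lies in
   [0, log_phi (B~ . Fhat / B . Fhat)), up to a margin that vanishes as m grows.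
   For K_n = a b^n (1 + o(1)) we get y(K_n) = n log_phi b + const + o(1), and
   frakF^-1(K_n) = y(K_n) + o(1) because frakF(x) = (phi/sqrt 5)(phi^x + O(1)).
   It remains that n theta mod 1 is equidistributed for irrational theta: by
   Dirichlet some q theta is within a tiny d of an integer, the translates of an
   arc of length |d| by multiples of |d| tile the circle, and each translate is
   visited about as often as the arc itself. *)

From Pilot Require Import Defs.
From Stdlib Require Import Reals Lra Lia List QArith ZArith Classical ClassicalEpsilon.
From Coquelicot Require Import Coquelicot.
Import ListNotations.
Open Scope R_scope.
(* Stdlib's [Rtopology] also defines [ind]. *)
Local Notation ind := Pilot.Defs.ind.

(** * Zeckendorf words *)

Lemma fibF_SS n : fibF (S (S n)) = (fibF (S n) + fibF n)%nat.
Proof. destruct n; reflexivity. Qed.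

Lemma fibF_0 : fibF 0 = 1%nat. Proof. reflexivity. Qed.
Lemma fibF_1 : fibF 1 = 1%nat. Proof. reflexivity. Qed.

Lemma fibF_ge1 n : (1 <= fibF n)%nat.
Proof.
  assert (H : forall m, (1 <= fibF m)%nat /\ (1 <= fibF (S m))%nat).
  { induction m as [|m [H1 H2]]; [cbn; lia|]. split; [exact H2|]. rewrite fibF_SS; lia. }
  apply H.
Qed.

Lemma fibF_le_S n : (fibF n <= fibF (S n))%nat.
Proof. destruct n; [cbn; lia|]. rewrite fibF_SS. lia. Qed.

Arguments fibF : simpl never.

Fixpoint word_value (w : list bool) : nat :=
  match w with
  | [] => 0
  | x :: w' => (if x then fibF (S (length w')) else 0) + word_value w'
  end.

Fixpoint admissible (w : list bool) : Prop :=
  match w with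
  | [] => True
  | x :: w' =>
      match w' with [] => True | y :: _ => x = true -> y = false end /\ admissible w'
  end.

Lemma bit_cons x w k : (1 <= k)%nat -> bit (x :: w) (S k) = bit w k.
Proof. intros Hk. unfold bit. replace (S k - 1)%nat with (S (k - 1)) by lia. reflexivity. Qed.

Lemma dotF_word_value w : dotF w = word_value w.
Proof.
  induction w as [|x w IH]; [reflexivity|].
  cbn [word_value]. rewrite <- IH. unfold dotF. cbn [length seq]. rewrite <- (seq_shift (length w) 1).
  cbn [map fold_right]. rewrite map_map. f_equal.
  - unfold bit. cbn -[fibF]. replace (length w - 0 + 1)%nat with (S (length w)) by lia.
    destruct x; lia.
  - f_equal. apply map_ext_in. intros k Hk. apply in_seq in Hk.
    rewrite bit_cons by lia. reflexivity.
Qed.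

Lemma no_consec_admissible e : no_consec e <-> admissible e.
Proof.
  unfold no_consec. induction e as [|x w IH].
  - cbn. split; [auto|]. intros _ k _ Hk. cbn in Hk. lia.
  - split.
    + intros H. split.
      * destruct w as [|y w']; [exact I|]. intros ->.
        specialize (H 1%nat ltac:(lia) ltac:(cbn; lia)).
        unfold bit in H. cbn in H. destruct y; cbn in H; congruence.
      * apply IH. intros k Hk Hk2. specialize (H (S k) ltac:(lia) ltac:(cbn; lia)).
        replace (S k + 1)%nat with (S (k + 1)) in H by lia.
        rewrite !bit_cons in H by lia. exact H.
    + intros [H1 H2] k Hk Hk2. destruct k as [|[|k]]; [lia| |].
      * destruct w as [|y w']; [cbn in Hk2; lia|].
        unfold bit. cbn. destruct x, y; auto. specialize (H1 eq_refl); discriminate.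
      * replace (S (S k) + 1)%nat with (S (S k + 1)) by lia.
        rewrite !bit_cons by lia. apply IH; auto; cbn in Hk2; lia.
Qed.

Lemma word_value_lt w : admissible w ->
  (word_value w < fibF (S (length w)))%nat /\
  (hd false w = false -> (word_value w < fibF (length w))%nat).
Proof.
  induction w as [|x w IH]; intros Hw.
  - cbn. rewrite fibF_0, fibF_1. lia.
  - destruct Hw as [Hxy Hw]. destruct (IH Hw) as [IH1 IH2]. cbn.
    destruct x.
    + split; [|discriminate].
      destruct w as [|y w'].
      * cbn. rewrite fibF_SS, fibF_0, fibF_1. lia.
      * specialize (Hxy eq_refl). subst y. specialize (IH2 eq_refl).
        rewrite fibF_SS. cbn [length] in *. lia.
    + split; [|lia]. rewrite fibF_SS. pose proof (fibF_ge1 (length w)). lia.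
Qed.

Lemma word_value_inj w1 : forall w2, admissible w1 -> admissible w2 ->
  length w1 = length w2 -> word_value w1 = word_value w2 -> w1 = w2.
Proof.
  induction w1 as [|x1 w1 IH]; intros w2 H1 H2 Hl Hv.
  - destruct w2; cbn in Hl; congruence.
  - destruct w2 as [|x2 w2]; cbn in Hl; [congruence|]. injection Hl as Hl.
    destruct H1 as [_ H1], H2 as [_ H2].
    destruct (word_value_lt w1 H1) as [U1 _], (word_value_lt w2 H2) as [U2 _].
    cbn in Hv. rewrite Hl in *.
    destruct x1, x2; try lia; f_equal; apply IH; auto; lia.
Qed.

Lemma admissible_app_l p t : admissible (p ++ t) -> admissible p.
Proof.
  induction p as [|x p IH]; cbn; [auto|].
  intros [H1 H2]. split; [destruct p; auto|auto].
Qed.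

Lemma admissible_app_r p t : admissible (p ++ t) -> admissible t.
Proof. induction p as [|x p IH]; cbn; [auto|]. intros [_ H]; auto. Qed.

Lemma admissible_app p t : admissible p -> admissible t ->
  (last p false = true -> hd false t = false) -> admissible (p ++ t).
Proof.
  induction p as [|x p IH]; intros Hp Ht Hl; [exact Ht|].
  destruct Hp as [H1 H2]. destruct p as [|y p].
  - cbn in *. split; [destruct t; auto|auto].
  - split; [exact H1|]. apply IH; auto.
Qed.

Lemma admissible_junction p y t :
  admissible (p ++ y :: t) -> last p false = true -> y = false.
Proof.
  induction p as [|x p IH]; cbn; [discriminate|].
  intros [H1 H2] Hl. destruct p as [|z p].
  - subst. auto.
  - auto.
Qed.

Lemma admissible_zeros j : admissible (repeat false j).
Proof. induction j; cbn; [auto|]. split; [destruct j; cbn; auto|auto]. Qed.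

Lemma word_value_zeros j : word_value (repeat false j) = 0%nat.
Proof. induction j; cbn; auto. Qed.

Lemma word_value_app p t :
  word_value (p ++ t) = (word_value (p ++ repeat false (length t)) + word_value t)%nat.
Proof.
  induction p as [|x p IH]; cbn; [rewrite word_value_zeros; lia|].
  rewrite !length_app, repeat_length, IH. lia.
Qed.

Lemma word_value_hd_true w : hd false w = true -> (fibF (length w) <= word_value w)%nat.
Proof. destruct w as [|[] w]; cbn; [discriminate|lia|discriminate]. Qed.

Lemma zeckendorf_exists L : forall r, (r < fibF (S L))%nat ->
  exists t, admissible t /\ length t = L /\ word_value t = r /\
            ((r < fibF L)%nat -> hd false t = false).
Proof.
  induction L as [|L IH]; intros r Hr.
  - exists []. rewrite fibF_1 in Hr. rewrite fibF_0. cbn. repeat split; auto; lia.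
  - destruct (Nat.le_gt_cases (fibF (S L)) r) as [Hle|Hlt].
    + rewrite fibF_SS in Hr.
      destruct (IH (r - fibF (S L))%nat) as [t [H1 [H2 [H3 H4]]]].
      { pose proof (fibF_le_S L). lia. }
      exists (true :: t). cbn. repeat split; auto; [| |lia].
      * destruct t; auto. intros _. apply H4. lia.
      * rewrite H2, H3. lia.
    + destruct (IH r Hlt) as [t [H1 [H2 [H3 _]]]].
      exists (false :: t). cbn. repeat split; auto. destruct t; auto; discriminate.
Qed.

Lemma zeckendorf_exists_lead M m : (fibF M <= m < fibF (S M))%nat ->
  exists w, admissible w /\ length w = M /\ word_value w = m /\ hd false w = true.
Proof.
  intros Hm. destruct (zeckendorf_exists M m ltac:(lia)) as [w [W1 [W2 [W3 _]]]].
  exists w. repeat split; auto.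
  destruct (hd false w) eqn:E; auto.
  destruct (word_value_lt w W1) as [_ U]. specialize (U E). rewrite W2 in U. lia.
Qed.

Lemma word_value_app_lt p : forall c t1 t2,
  admissible (p ++ t1) -> admissible (c ++ t2) -> length p = length c ->
  length t1 = length t2 -> (word_value p < word_value c)%nat ->
  (word_value (p ++ t1) < word_value (c ++ t2))%nat.
Proof.
  induction p as [|x p IH]; intros c t1 t2 H1 H2 Hl Ht Hv.
  - destruct c; cbn in Hl; [cbn in Hv; lia|discriminate].
  - destruct c as [|y c]; cbn in Hl; [discriminate|]. injection Hl as Hl.
    destruct H1 as [_ H1], H2 as [_ H2].
    destruct (word_value_lt _ (admissible_app_l _ _ H1)) as [Up _].
    destruct (word_value_lt _ (admissible_app_l _ _ H2)) as [Uc _].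
    destruct (word_value_lt _ H1) as [Upt _].
    cbn in Hv |- *. rewrite !length_app in *. rewrite Hl, Ht in *.
    destruct x, y; try lia.
    + specialize (IH c t1 t2 H1 H2 eq_refl Ht ltac:(lia)). lia.
    + apply IH; auto.
Qed.

(** * Leading blocks as intervals *)

(* [block_start b j] and [block_width b j] delimit the integers whose
   Zeckendorf expansion is [b] followed by [j] further digits. *)
Definition block_start (b : list bool) (j : nat) : nat := word_value (b ++ repeat false j).

Definition block_width (b : list bool) (j : nat) : nat :=
  if last b false then fibF j else fibF (S j).

Definition block (s : nat) (b : list bool) : Prop :=
  admissible b /\ length b = s /\ hd false b = true.

Lemma block_width_pos b j : (1 <= block_width b j)%nat.
Proof. unfold block_width. destruct (last b false); apply fibF_ge1. Qed.

Lemma admissible_pad b j : admissible b -> admissible (b ++ repeat false j).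
Proof.
  intros H. apply admissible_app; auto using admissible_zeros.
  intros _. destruct j; reflexivity.
Qed.

Lemma word_value_in_block w t : admissible (w ++ t) ->
  (block_start w (length t) <= word_value (w ++ t) <
   block_start w (length t) + block_width w (length t))%nat.
Proof.
  intros Hok. rewrite word_value_app. unfold block_start.
  destruct (word_value_lt t (admissible_app_r _ _ Hok)) as [U1 U2].
  unfold block_width. destruct (last w false) eqn:El; [|lia].
  destruct t as [|y t]; [cbn in *; rewrite fibF_0; lia|].
  assert (y = false) by (eapply admissible_junction; eauto). subst y.
  specialize (U2 eq_refl). lia.
Qed.

Lemma block_fill w j r : admissible w -> (r < block_width w j)%nat ->
  exists t, length t = j /\ admissible (w ++ t) /\
            word_value (w ++ t) = (block_start w j + r)%nat.
Proof.
  intros Hw Hr. unfold block_width in Hr. unfold block_start.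
  destruct (last w false) eqn:El.
  - destruct j as [|j].
    + exists []. rewrite fibF_0 in Hr. rewrite !app_nil_r. repeat split; auto. cbn. lia.
    + destruct (zeckendorf_exists j r Hr) as [t [H1 [H2 [H3 _]]]].
      exists (false :: t). repeat split.
      * cbn. auto.
      * apply admissible_app; auto. split; [destruct t; auto; discriminate|auto].
      * rewrite word_value_app. cbn. rewrite H2, H3. lia.
  - destruct (zeckendorf_exists j r Hr) as [t [H1 [H2 [H3 _]]]].
    exists t. repeat split; auto.
    + apply admissible_app; auto. congruence.
    + rewrite word_value_app, H2, H3. lia.
Qed.

Lemma block_start_ge s b j : block s b -> (fibF (s + j) <= block_start b j)%nat.
Proof.
  intros [H1 [H2 H3]]. unfold block_start.
  pose proof (word_value_hd_true (b ++ repeat false j)) as H.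
  rewrite length_app, repeat_length, H2 in H. apply H.
  destruct b; cbn in *; [discriminate|exact H3].
Qed.

Lemma block_start_lt s b j : block s b -> (block_start b j < fibF (S (s + j)))%nat.
Proof.
  intros [H1 [H2 H3]]. unfold block_start.
  destruct (word_value_lt _ (admissible_pad b j H1)) as [U _].
  rewrite length_app, repeat_length, H2 in U. exact U.
Qed.

Lemma block_end_le s b j : block s b ->
  (block_start b j + block_width b j <= fibF (S (s + j)))%nat.
Proof.
  intros [B1 [B2 B3]]. pose proof (block_width_pos b j).
  destruct (block_fill b j (block_width b j - 1) B1 ltac:(lia)) as [t [T1 [T2 T3]]].
  destruct (word_value_lt _ T2) as [U _]. rewrite length_app, B2, T1 in U. lia.
Qed.

Lemma inFs_block s b : (1 <= s)%nat -> inFs s b -> block s b.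
Proof.
  intros Hs [m [e [[Z1 [Z2 [Z3 Z4]]] [Hl Hf]]]].
  apply no_consec_admissible in Z3. subst b.
  split; [|split].
  - apply (admissible_app_l _ (skipn s e)). rewrite firstn_skipn. exact Z3.
  - apply firstn_length_le. exact Hl.
  - destruct e as [|x e]; [cbn in Z1; lia|]. destruct s as [|s]; [lia|].
    unfold bit in Z2. cbn in *. destruct x; [reflexivity|discriminate].
Qed.

Lemma zeck_word_value_app b t : hd false b = true -> admissible (b ++ t) ->
  zeck (word_value (b ++ t)) (b ++ t).
Proof.
  intros Hb Hok. destruct b as [|x b]; [discriminate|]. cbn in Hb. subst x.
  split; [|split; [|split]].
  - cbn. lia.
  - reflexivity.
  - apply no_consec_admissible, Hok.
  - symmetry. apply dotF_word_value.
Qed.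

Lemma block_inFs s c : block s c -> inFs s c.
Proof.
  intros [H1 [H2 H3]]. exists (word_value c), c. split; [|split].
  - pose proof (zeck_word_value_app c [] H3) as Z. rewrite app_nil_r in Z. exact (Z H1).
  - lia.
  - apply firstn_all2. lia.
Qed.

Lemma LB_iff_block_interval s b m : block s b ->
  LB s m b <-> exists j, (block_start b j <= m < block_start b j + block_width b j)%nat.
Proof.
  intros Hb. split.
  - intros [e [[Z1 [Z2 [Z3 Z4]]] [Hl Hf]]]. apply no_consec_admissible in Z3.
    pose proof (firstn_skipn s e) as E. rewrite Hf in E.
    set (t := skipn s e) in *. clearbody t. exists (length t). rewrite Z4, dotF_word_value, <- E.
    apply word_value_in_block. rewrite E. exact Z3.
  - intros [j Hj]. destruct Hb as [B1 [B2 B3]].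
    destruct (block_fill b j (m - block_start b j) B1 ltac:(lia)) as [t [T1 [T2 T3]]].
    exists (b ++ t). split; [|split].
    + replace m with (word_value (b ++ t)) by lia. apply zeck_word_value_app; auto.
    + rewrite length_app. lia.
    + rewrite <- B2, firstn_app, firstn_all, Nat.sub_diag. apply app_nil_r.
Qed.

Lemma next_block s b j : (1 <= s)%nat -> block s b ->
  (block_start b j + block_width b j < fibF (S (s + j)))%nat ->
  exists p t, block s p /\ length t = j /\ admissible (p ++ t) /\
    word_value (p ++ t) = (block_start b j + block_width b j)%nat /\
    (word_value b < word_value p)%nat.
Proof.
  intros Hs Hb Hlt. pose proof (block_start_ge s b j Hb) as Hge.
  destruct (zeckendorf_exists_lead (s + j) (block_start b j + block_width b j) ltac:(lia))
    as [w [W1 [W2 [W3 W4]]]].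
  pose proof (firstn_skipn s w) as E.
  set (p := firstn s w) in *. set (t := skipn s w) in *.
  assert (Hp : block s p).
  { split; [|split].
    - apply (admissible_app_l _ t). rewrite E. exact W1.
    - apply firstn_length_le. lia.
    - destruct w as [|x w]; [cbn in W2; lia|]. destruct s as [|s]; [lia|]. exact W4. }
  assert (Ht : length t = j) by (unfold t; rewrite length_skipn; lia).
  clearbody p t. exists p, t. rewrite E. repeat split; auto; try apply Hp.
  destruct Hb as [B1 [B2 B3]], Hp as [P1 [P2 P3]].
  destruct (Nat.lt_trichotomy (word_value p) (word_value b)) as [Hc|[Hc|Hc]]; auto; exfalso.
  - pose proof (word_value_app_lt p b t (repeat false j)) as M. rewrite E in M.
    specialize (M W1 (admissible_pad b j B1) ltac:(lia) ltac:(rewrite repeat_length; lia) Hc).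
    unfold block_start in *. lia.
  - assert (p = b) by (apply word_value_inj; auto; lia). subst p.
    pose proof (word_value_in_block b t) as I. rewrite E, Ht in I. specialize (I W1). lia.
Qed.

Lemma block_start_succ s b c j : (1 <= s)%nat -> block s b -> block s c ->
  word_value c = S (word_value b) ->
  block_start c j = (block_start b j + block_width b j)%nat.
Proof.
  intros Hs Hb Hc Hv. pose proof Hb as [B1 [B2 B3]]. pose proof Hc as [C1 [C2 C3]].
  pose proof (block_width_pos b j) as HL.
  destruct (block_fill b j (block_width b j - 1) B1 ltac:(lia)) as [t [T1 [T2 T3]]].
  assert (Hge : (block_start b j + block_width b j <= block_start c j)%nat).
  { pose proof (word_value_app_lt b c t (repeat false j) T2 (admissible_pad c j C1)
      ltac:(lia) ltac:(rewrite repeat_length; lia) ltac:(lia)).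
    unfold block_start in *. lia. }
  destruct (Nat.eq_dec (block_start c j) (block_start b j + block_width b j)) as [Heq|Hne];
    [exact Heq|exfalso].
  pose proof (block_start_lt s c j Hc).
  destruct (next_block s b j Hs Hb ltac:(lia)) as [p [t' [P1 [P2 [P3 [P4 P5]]]]]].
  destruct P1 as [Q1 [Q2 Q3]].
  destruct (Nat.eq_dec (word_value p) (word_value c)) as [Hpc|Hpc].
  - assert (p = c) by (apply word_value_inj; auto; lia). subst p.
    pose proof (word_value_in_block c t' P3) as I. rewrite P2 in I. lia.
  - pose proof (word_value_app_lt c p (repeat false j) t' (admissible_pad c j C1) P3
      ltac:(lia) ltac:(rewrite repeat_length; lia) ltac:(lia)).
    unfold block_start in *. lia.
Qed.

Lemma block_end_last s b j : (1 <= s)%nat -> block s b ->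
  (word_value b + 1 = fibF (S s))%nat ->
  (block_start b j + block_width b j = fibF (S (s + j)))%nat.
Proof.
  intros Hs Hb Hv. pose proof (block_end_le s b j Hb).
  destruct (Nat.eq_dec (block_start b j + block_width b j) (fibF (S (s + j)))) as [E|E];
    [exact E|exfalso].
  destruct (next_block s b j Hs Hb ltac:(lia)) as [p [t [[Q1 [Q2 Q3]] [_ [_ [_ P5]]]]]].
  destruct (word_value_lt p Q1) as [U _]. rewrite Q2 in U. lia.
Qed.

Lemma block_no_successor s b : block s b ->
  ~ (exists c, inFs s c /\ dotF c = S (dotF b)) -> (word_value b + 1 = fibF (S s))%nat.
Proof.
  intros Hb Hn. pose proof Hb as [B1 [B2 B3]].
  destruct (word_value_lt b B1) as [U _]. rewrite B2 in U.
  destruct (Nat.eq_dec (word_value b + 1) (fibF (S s))) as [E|E]; [exact E|exfalso].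
  destruct (zeckendorf_exists_lead s (word_value b + 1)) as [c [C1 [C2 [C3 C4]]]].
  { pose proof (word_value_hd_true b B3). rewrite B2 in *. lia. }
  apply Hn. exists c. split.
  - apply block_inFs. repeat split; auto.
  - rewrite !dotF_word_value. lia.
Qed.

Lemma length_rep10 i : length (rep10 i) = (2 * i)%nat.
Proof. induction i; cbn; lia. Qed.

Lemma word_value_rep10_app i w : word_value w = fibF (S (length w)) ->
  word_value (rep10 i ++ w) = fibF (S (length (rep10 i ++ w))).
Proof.
  induction i as [|i IH]; intros H; cbn; [exact H|].
  rewrite IH by exact H. rewrite length_app in *.
  rewrite (fibF_SS (S (length (rep10 i) + length w))). lia.
Qed.

(* [fibF (S (s + j))] is where the intervals of the largest block end. *)
Lemma bspecial_block_start s : (2 <= s)%nat ->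
  length (bspecial s) = s /\ forall j, block_start (bspecial s) j = fibF (S (s + j)).
Proof.
  intros Hs. unfold bspecial, block_start. destruct (Nat.even s) eqn:E.
  - apply Nat.even_spec in E. destruct E as [h Hh].
    replace ((s - 2) / 2)%nat with (h - 1)%nat
      by (replace (s - 2)%nat with ((h - 1) * 2)%nat by lia; rewrite Nat.div_mul; lia).
    split; [rewrite length_app, length_rep10; cbn; lia|].
    intros j. rewrite <- app_assoc, word_value_rep10_app.
    + rewrite !length_app, length_rep10, repeat_length. cbn. f_equal. lia.
    + cbn. rewrite repeat_length, word_value_zeros, (fibF_SS (S j)). lia.
  - assert (Ho : Nat.odd s = true) by (unfold Nat.odd; rewrite E; reflexivity).
    apply Nat.odd_spec in Ho. destruct Ho as [h Hh].
    replace ((s - 3) / 2)%nat with (h - 1)%nat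
      by (replace (s - 3)%nat with ((h - 1) * 2)%nat by lia; rewrite Nat.div_mul; lia).
    split; [rewrite length_app, length_rep10; cbn; lia|].
    intros j. rewrite <- app_assoc, word_value_rep10_app.
    + rewrite !length_app, length_rep10, repeat_length. cbn. f_equal. lia.
    + cbn. rewrite repeat_length, word_value_zeros, (fibF_SS (S (S j))). lia.
Qed.

Lemma tilde_block_start s b : (2 <= s)%nat -> inFs s b ->
  length (tilde s b) = s /\
  forall j, block_start (tilde s b) j = (block_start b j + block_width b j)%nat.
Proof.
  intros Hs Hb. apply inFs_block in Hb; [|lia].
  unfold tilde. destruct (excluded_middle_informative _) as [H|H].
  - destruct (constructive_indefinite_description _ H) as [c [Hc1 Hc2]]. cbn.
    apply inFs_block in Hc1; [|lia]. split; [apply Hc1|].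
    intros j. apply block_start_succ with s; auto; [lia|]. rewrite <- !dotF_word_value. exact Hc2.
  - pose proof (block_no_successor s b Hb H) as E.
    destruct (bspecial_block_start s Hs) as [L1 L2]. split; [exact L1|].
    intros j. rewrite L2. symmetry. apply block_end_last; auto. lia.
Qed.

(** * Binet's formula *)

Lemma sqrt5_sq : sqrt 5 * sqrt 5 = 5.
Proof. apply sqrt_sqrt. lra. Qed.

Lemma sqrt5_bounds : 2 < sqrt 5 < 3.
Proof. pose proof sqrt5_sq. pose proof (sqrt_pos 5). split; nra. Qed.

Lemma phi_sq : phi * phi = phi + 1.
Proof. unfold phi. pose proof sqrt5_sq. nra. Qed.

Lemma phi_bounds : 3/2 < phi < 2.
Proof. unfold phi. pose proof sqrt5_bounds. lra. Qed.

Lemma omega_pos : 0 < omega.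
Proof. unfold omega. apply Rinv_0_lt_compat. pose proof phi_bounds. lra. Qed.

Definition psi : R := 1 - phi.

Lemma psi_sq : psi * psi = psi + 1.
Proof. unfold psi. pose proof phi_sq. nra. Qed.

Lemma fibF_binet n : INR (fibF n) = (phi ^ S n - psi ^ S n) / sqrt 5.
Proof.
  pose proof sqrt5_bounds. pose proof phi_bounds. pose proof phi_sq.
  assert (Hs : sqrt 5 = phi - psi) by (unfold psi, phi; lra).
  assert (Hrec : forall m, INR (fibF m) = (phi ^ S m - psi ^ S m) / sqrt 5 /\
                        INR (fibF (S m)) = (phi ^ S (S m) - psi ^ S (S m)) / sqrt 5).
  { induction m as [|m [IH1 IH2]].
    - rewrite fibF_0, fibF_1, Hs. unfold psi. split; cbn; field; lra.
    - split; [exact IH2|]. rewrite fibF_SS, plus_INR, IH1, IH2.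
      replace (phi ^ S (S (S m))) with (phi ^ S m * (phi * phi)) by (cbn; ring).
      replace (psi ^ S (S (S m))) with (psi ^ S m * (psi * psi)) by (cbn; ring).
      rewrite phi_sq, psi_sq. cbn. field. lra. }
  apply Hrec.
Qed.

Definition rho : R := phi / sqrt 5.

Lemma rho_pos : 0 < rho.
Proof. unfold rho. pose proof phi_bounds. pose proof sqrt5_bounds. apply Rdiv_lt_0_compat; lra. Qed.

Lemma fibF_approx n : Rabs (INR (fibF n) - rho * phi ^ n) < 1.
Proof.
  pose proof sqrt5_bounds.
  replace (INR (fibF n) - rho * phi ^ n) with (- (psi ^ S n / sqrt 5))
    by (rewrite fibF_binet; unfold rho; cbn; field; lra).
  rewrite Rabs_Ropp. unfold Rdiv. rewrite Rabs_mult, <- RPow_abs, Rabs_inv, (Rabs_right (sqrt 5)) by lra.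
  assert (Hpsi : Rabs psi <= 1) by (unfold psi; pose proof phi_bounds; apply Rabs_le; lra).
  assert (Rabs psi ^ S n <= 1) by (rewrite <- (pow1 (S n)); apply pow_incr; split; [apply Rabs_pos|exact Hpsi]).
  assert (0 <= Rabs psi ^ S n) by (apply pow_le, Rabs_pos).
  assert (/ sqrt 5 < 1) by (rewrite <- Rinv_1; apply Rinv_lt_contravar; lra).
  assert (0 < / sqrt 5) by (apply Rinv_0_lt_compat; lra).
  nra.
Qed.

Fixpoint hat_value (w : list bool) : R :=
  match w with [] => 0 | x :: w' => (if x then 1 else 0) + omega * hat_value w' end.

Lemma dotHat_hat_value w : dotHat w = hat_value w.
Proof.
  induction w as [|x w IH]; [reflexivity|].
  cbn [hat_value]. rewrite <- IH. unfold dotHat. cbn [length seq].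
  rewrite <- (seq_shift (length w) 1). cbn [map fold_right]. rewrite map_map. f_equal.
  - unfold bit. destruct x; cbn; ring.
  - transitivity (fold_right Rplus 0
      (map (fun k => omega * (INR (bit w k) * omega ^ (k - 1))) (seq 1 (length w)))).
    + f_equal. apply map_ext_in. intros k Hk. apply in_seq in Hk.
      rewrite bit_cons by lia. replace (S k - 1)%nat with (S (k - 1)) by lia. cbn. ring.
    + induction (seq 1 (length w)) as [|k l IHl]; cbn; [ring|]. rewrite IHl. ring.
Qed.

Lemma hat_value_nonneg w : 0 <= hat_value w.
Proof.
  pose proof omega_pos. induction w as [|x w IH]; cbn; [lra|]. destruct x; nra.
Qed.

Lemma hat_value_ge1 w : hd false w = true -> 1 <= hat_value w.
Proof.
  destruct w as [|x w]; cbn; [discriminate|]. intros ->.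
  pose proof (hat_value_nonneg w). pose proof omega_pos. nra.
Qed.

Lemma block_start_approx w j :
  Rabs (INR (block_start w j) - rho * phi ^ (length w + j) * hat_value w) <= INR (length w).
Proof.
  unfold block_start. induction w as [|x w IH].
  - cbn. rewrite word_value_zeros. cbn. rewrite Rmult_0_r, Rminus_0_r, Rabs_R0. lra.
  - cbn [app word_value hat_value length]. rewrite length_app, repeat_length, S_INR.
    pose proof (fibF_approx (S (length w + j))) as B.
    assert (Hp : rho * phi ^ (S (length w) + j) * ((if x then 1 else 0) + omega * hat_value w) =
                 (if x then rho * phi ^ S (length w + j) else 0) +
                 rho * phi ^ (length w + j) * hat_value w).
    { replace (S (length w) + j)%nat with (S (length w + j)) by lia.
      pose proof phi_bounds. unfold omega. destruct x; cbn; field; lra. }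
    rewrite Hp. rewrite plus_INR.
    destruct x.
    + replace (_ - _) with ((INR (fibF (S (length w + j))) - rho * phi ^ S (length w + j)) +
        (INR (word_value (w ++ repeat false j)) - rho * phi ^ (length w + j) * hat_value w)) by ring.
      eapply Rle_trans; [apply Rabs_triang|]. lra.
    + replace (_ - _) with (INR (word_value (w ++ repeat false j)) -
        rho * phi ^ (length w + j) * hat_value w) by (cbn; ring).
      lra.
Qed.

(** * Leading blocks on the logarithmic scale *)

Lemma ln_phi_pos : 0 < ln phi.
Proof. rewrite <- ln_1. apply ln_increasing; pose proof phi_bounds; lra. Qed.

Lemma logphi_Rpower x : logphi (Rpower phi x) = x.
Proof. unfold logphi. rewrite ln_Rpower. field. pose proof ln_phi_pos. lra. Qed.

Lemma Rpower_logphi x : 0 < x -> Rpower phi (logphi x) = x.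
Proof.
  intros Hx. pose proof ln_phi_pos. unfold Rpower, logphi.
  replace (ln x / ln phi * ln phi) with (ln x) by (field; lra). apply exp_ln, Hx.
Qed.

Lemma logphi_mult x y : 0 < x -> 0 < y -> logphi (x * y) = logphi x + logphi y.
Proof. intros Hx Hy. unfold logphi. rewrite ln_mult by assumption. field. pose proof ln_phi_pos. lra. Qed.

Lemma logphi_le x y : 0 < x -> x <= y -> logphi x <= logphi y.
Proof.
  intros Hx Hxy. unfold logphi, Rdiv. apply Rmult_le_compat_r.
  - left. apply Rinv_0_lt_compat, ln_phi_pos.
  - apply ln_le; assumption.
Qed.

Lemma logphi_lt x y : 0 < x -> x < y -> logphi x < logphi y.
Proof.
  intros Hx Hxy. unfold logphi, Rdiv. apply Rmult_lt_compat_r.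
  - apply Rinv_0_lt_compat, ln_phi_pos.
  - apply ln_increasing; assumption.
Qed.

Lemma Rpower_phi_pos x : 0 < Rpower phi x.
Proof. apply exp_pos. Qed.

Lemma Rpower_phi_split n D e : 0 < D ->
  Rpower phi (INR n + logphi D + e) = phi ^ n * D * Rpower phi e.
Proof.
  intros HD. pose proof phi_bounds.
  rewrite !Rpower_plus, Rpower_pow, Rpower_logphi by lra. reflexivity.
Qed.

Lemma logphi_split n D e : 0 < D -> logphi (phi ^ n * D * Rpower phi e) = INR n + logphi D + e.
Proof. intros HD. rewrite <- (Rpower_phi_split n D e HD). apply logphi_Rpower. Qed.

Definition scaled_log (m : nat) : R := logphi (INR m / rho).

Lemma Rpower_scaled_log m : (0 < m)%nat -> INR m = rho * Rpower phi (scaled_log m).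
Proof.
  intros Hm. pose proof rho_pos. unfold scaled_log.
  rewrite Rpower_logphi; [field; lra|]. apply Rdiv_lt_0_compat; [apply lt_0_INR|]; assumption.
Qed.

Lemma frac_part_plus_IZR x z : frac_part (x + IZR z) = frac_part x.
Proof.
  pose proof (Rplus_Int_part_frac_part x) as Ex. pose proof (base_fp x).
  symmetry. apply (Int_part_frac_part_spec (x + IZR z) (Int_part x + z)); [lra|].
  rewrite plus_IZR. lra.
Qed.

Lemma nat_floor x : 0 <= x -> exists k : nat, x = INR k + frac_part x.
Proof.
  intros Hx. pose proof (Rplus_Int_part_frac_part x). pose proof (base_fp x).
  assert (Hm1 : -1 < IZR (Int_part x)) by lra. apply lt_IZR in Hm1.
  exists (Z.to_nat (Int_part x)). rewrite INR_IZR_INZ, Z2Nat.id by lia. lra.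
Qed.

Lemma frac_part_le r : 0 <= r -> frac_part r <= r.
Proof. intros Hr. destruct (nat_floor r Hr) as [k Hk]. pose proof (pos_INR k). lra. Qed.

Lemma frac_part_plus_le x d : 0 <= d -> frac_part (x + d) <= frac_part x + d.
Proof.
  intros Hd. pose proof (Rplus_Int_part_frac_part x). pose proof (base_fp x).
  replace (x + d) with ((frac_part x + d) + IZR (Int_part x)) by lra.
  rewrite frac_part_plus_IZR. apply frac_part_le. lra.
Qed.

Lemma frac_part_INR_plus_le (n : nat) r : 0 <= r -> frac_part (INR n + r) <= r.
Proof.
  intros Hr. rewrite INR_IZR_INZ, Rplus_comm, frac_part_plus_IZR. apply frac_part_le, Hr.
Qed.

(* [E k] holds, for large [k], exactly when the fractional part of [y k - u]
   lies in [[0, l)], up to an arbitrarily small margin. *)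
Definition frac_window (y : nat -> R) (E : nat -> Prop) (u l : R) : Prop :=
  forall eta, 0 < eta -> eventually (fun k =>
    (frac_part (y k - u - eta) < l - 2 * eta -> E k) /\
    (E k -> frac_part (y k - u + eta) < l + 2 * eta)).

Lemma frac_window_comp y E u l (f : nat -> nat) : frac_window y E u l ->
  (forall N, eventually (fun k => (N <= f k)%nat)) ->
  frac_window (fun k => y (f k)) (fun k => E (f k)) u l.
Proof.
  intros HW Hf eta Heta. destruct (HW eta Heta) as [N HN]. destruct (Hf N) as [K HK].
  exists K. intros k Hk. apply HN, HK, Hk.
Qed.

Lemma frac_window_frac_le y beta : frac_window y (fun k => frac_part (y k) <= beta) 0 beta.
Proof.
  intros eta Heta. exists 0%nat. intros k _. rewrite !Rminus_0_r. split; intros H.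
  - pose proof (frac_part_plus_le (y k - eta) eta ltac:(lra)) as P.
    replace (y k - eta + eta) with (y k) in P by ring. lra.
  - pose proof (frac_part_plus_le (y k) eta ltac:(lra)). lra.
Qed.

Lemma eventually_INR_gt T : eventually (fun n : nat => T < INR n).
Proof.
  destruct (INR_archimed 1 T ltac:(lra)) as [N HN]. exists N. intros n Hn.
  apply le_INR in Hn. lra.
Qed.

Lemma inv_gt1 E : 1 < E -> 0 < / E < 1.
Proof. intros HE. split; [apply Rinv_0_lt_compat|rewrite <- Rinv_1; apply Rinv_lt_contravar]; lra. Qed.

Lemma approx_margin A D E s : 1 <= D -> 1 < E -> 0 <= s -> s / (1 - / E) <= A ->
  A * D * / E <= A * D - s /\ A * D + s <= A * D * E.
Proof.
  intros HD HE Hs HA. pose proof (inv_gt1 E HE).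
  apply (Rmult_le_compat_r (1 - / E)) in HA; [|lra].
  replace (s / (1 - / E) * (1 - / E)) with s in HA by (field; lra).
  assert (HEE : 1 - / E <= E - 1) by (assert (E * / E = 1) by (field; lra); nra).
  assert (H1 : A * (1 - / E) <= A * D * (1 - / E)) by (apply Rmult_le_compat_r; nra).
  assert (H2 : A * D * (1 - / E) <= A * D * (E - 1)) by (apply Rmult_le_compat_l; nra).
  split; [|replace (A * D * E) with (A * D + A * D * (E - 1)) by ring]; lra.
Qed.

Lemma Rpower_phi_gt1 eta : 0 < eta -> 1 < Rpower phi eta.
Proof.
  intros Heta. pose proof phi_bounds.
  rewrite <- (Rpower_O phi) by lra. apply Rpower_lt; lra.
Qed.

Section BlockWindow.

Variables (s : nat) (Db Dt : R) (Vb Vt : nat -> nat) (P : nat -> Prop).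
Hypothesis HDb : 1 <= Db.
Hypothesis HDt : 1 <= Dt.
Hypothesis HVb : forall j, Rabs (INR (Vb j) - rho * phi ^ (s + j) * Db) <= INR s.
Hypothesis HVt : forall j, Rabs (INR (Vt j) - rho * phi ^ (s + j) * Dt) <= INR s.
Hypothesis HP : forall m, P m <-> exists j, (Vb j <= m < Vt j)%nat.

Lemma window_sufficient eta m : 0 < eta -> (0 < m)%nat ->
  Dt * (INR s / (1 - / Rpower phi eta)) <= INR m ->
  logphi Db + eta + INR s + 1 <= scaled_log m ->
  frac_part (scaled_log m - logphi Db - eta) < logphi Dt - logphi Db - 2 * eta -> P m.
Proof.
  intros Heta Hm0 Hm Hy Hf. pose proof phi_bounds. pose proof rho_pos. pose proof (pos_INR s).
  set (E := Rpower phi eta) in *.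
  assert (HE : 1 < E) by (apply Rpower_phi_gt1, Heta). pose proof (inv_gt1 E HE).
  destruct (nat_floor (scaled_log m - logphi Db - eta) ltac:(lra)) as [k Hk].
  pose proof (base_fp (scaled_log m - logphi Db - eta)).
  assert (Hsk : (s <= k)%nat) by (apply Nat.lt_succ_r, INR_lt; rewrite S_INR; lra).
  set (A := rho * phi ^ k).
  assert (HA : 0 < A) by (unfold A; pose proof (pow_lt phi k ltac:(lra)); nra).
  assert (Hlow : A * Db * E <= INR m).
  { rewrite (Rpower_scaled_log m Hm0). unfold A. rewrite Rmult_assoc, Rmult_assoc.
    apply Rmult_le_compat_l; [lra|]. unfold E. rewrite <- Rmult_assoc, <- Rpower_phi_split by lra.
    apply Rle_Rpower; lra. }
  assert (Hup : INR m < A * Dt * / E).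
  { rewrite (Rpower_scaled_log m Hm0). unfold A. rewrite Rmult_assoc, Rmult_assoc.
    apply Rmult_lt_compat_l; [lra|]. unfold E. rewrite <- Rpower_Ropp, <- Rmult_assoc.
    rewrite <- Rpower_phi_split by lra. apply Rpower_lt; lra. }
  assert (HAD : INR s / (1 - / E) <= A).
  { apply (Rmult_le_reg_l Dt); [lra|].
    assert (0 <= A * Dt * (1 - / E)) by (apply Rmult_le_pos; [nra|lra]). lra. }
  destruct (approx_margin A Db E (INR s) HDb HE ltac:(lra) HAD) as [_ Hb].
  destruct (approx_margin A Dt E (INR s) HDt HE ltac:(lra) HAD) as [Ht _].
  apply HP. exists (k - s)%nat.
  pose proof (HVb (k - s)%nat) as Hb'. pose proof (HVt (k - s)%nat) as Ht'.
  replace (s + (k - s))%nat with k in Hb', Ht' by lia. fold A in Hb', Ht'.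
  apply Rabs_le_between in Hb', Ht'.
  split; [apply INR_le|apply INR_lt]; lra.
Qed.

Lemma window_necessary eta m : 0 < eta ->
  INR s + Dt * (INR s / (1 - / Rpower phi eta)) <= INR m -> P m ->
  frac_part (scaled_log m - logphi Db + eta) < logphi Dt - logphi Db + 2 * eta.
Proof.
  intros Heta Hm HPm. pose proof phi_bounds. pose proof rho_pos.
  apply HP in HPm. destruct HPm as [j [Hj1 Hj2]]. apply le_INR in Hj1. apply lt_INR in Hj2.
  set (E := Rpower phi eta) in *.
  assert (HE : 1 < E) by (apply Rpower_phi_gt1, Heta). pose proof (inv_gt1 E HE).
  set (A := rho * phi ^ (s + j)).
  assert (HA : 0 < A) by (unfold A; pose proof (pow_lt phi (s + j) ltac:(lra)); nra).
  pose proof (HVb j) as Hb'. pose proof (HVt j) as Ht'. fold A in Hb', Ht'.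
  apply Rabs_le_between in Hb', Ht'.
  assert (HAD : INR s / (1 - / E) <= A) by (apply (Rmult_le_reg_l Dt); lra).
  destruct (approx_margin A Db E (INR s) HDb HE (pos_INR s) HAD) as [Hb _].
  destruct (approx_margin A Dt E (INR s) HDt HE (pos_INR s) HAD) as [_ Ht].
  assert (HADb : 0 < A * Db * / E) by (apply Rmult_lt_0_compat; nra).
  assert (Hlow : INR (s + j) + logphi Db - eta <= scaled_log m).
  { unfold scaled_log. replace (INR (s + j) + logphi Db - eta) with (INR (s + j) + logphi Db + - eta)
      by ring.
    rewrite <- logphi_split by lra. apply logphi_le.
    { apply Rmult_lt_0_compat; [apply Rmult_lt_0_compat; [apply pow_lt|]; lra|apply Rpower_phi_pos]. }
    apply (Rmult_le_reg_l rho); [lra|]. rewrite Rpower_Ropp. fold E.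
    replace (rho * (INR m / rho)) with (INR m) by (field; lra). unfold A in *. lra. }
  assert (Hup : scaled_log m < INR (s + j) + logphi Dt + eta).
  { unfold scaled_log. rewrite <- logphi_split by lra. apply logphi_lt; [apply Rdiv_lt_0_compat; lra|].
    apply (Rmult_lt_reg_l rho); [lra|]. fold E.
    replace (rho * (INR m / rho)) with (INR m) by (field; lra). unfold A in *. lra. }
  replace (scaled_log m - logphi Db + eta)
    with (INR (s + j) + (scaled_log m - logphi Db + eta - INR (s + j))) by ring.
  eapply Rle_lt_trans; [apply frac_part_INR_plus_le|]; lra.
Qed.

Lemma block_frac_window : frac_window scaled_log P (logphi Db) (logphi Dt - logphi Db).
Proof.
  intros eta Heta. pose proof rho_pos.
  set (c := 1 - / Rpower phi eta).
  assert (Hc : 0 < c).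
  { pose proof (inv_gt1 _ (Rpower_phi_gt1 eta Heta)). unfold c. lra. }
  set (L := logphi Db + eta + INR s + 1).
  assert (HT1 : 0 <= INR s) by apply pos_INR.
  assert (HT2 : 0 <= Dt * (INR s / c)) by (apply Rmult_le_pos; [lra|apply Rdiv_le_0_compat; lra]).
  assert (HT3 : 0 < rho * Rpower phi L) by (apply Rmult_lt_0_compat; [lra|apply Rpower_phi_pos]).
  destruct (eventually_INR_gt (INR s + Dt * (INR s / c) + rho * Rpower phi L)) as [N HN].
  exists N. intros m Hm. specialize (HN m Hm).
  assert (Hm0 : (0 < m)%nat) by (apply INR_lt; cbn; lra).
  split.
  - apply (window_sufficient eta m Heta Hm0); [fold c; lra|].
    fold L. rewrite <- (logphi_Rpower L). apply logphi_le; [apply Rpower_phi_pos|].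
    apply (Rmult_le_reg_l rho); [lra|]. replace (rho * (INR m / rho)) with (INR m) by (field; lra).
    lra.
  - apply (window_necessary eta m Heta). fold c. lra.
Qed.

End BlockWindow.

(** * Counting and densities *)

Lemma ind_true (P : Prop) : P -> ind P = 1.
Proof. unfold ind. destruct (excluded_middle_informative P); tauto. Qed.

Lemma ind_false (P : Prop) : ~ P -> ind P = 0.
Proof. unfold ind. destruct (excluded_middle_informative P); tauto. Qed.

Lemma ind_bounds (P : Prop) : 0 <= ind P <= 1.
Proof. unfold ind. destruct (excluded_middle_informative P); lra. Qed.

Lemma ind_mono (P Q : Prop) : (P -> Q) -> ind P <= ind Q.
Proof.
  intros H. unfold ind.
  destruct (excluded_middle_informative P), (excluded_middle_informative Q); tauto || lra.
Qed.

Fixpoint count_upto (Q : nat -> Prop) (n : nat) : R :=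
  match n with O => 0 | S n' => count_upto Q n' + ind (Q (S n')) end.

(* [cnt P n] sums [ind (P k)] over [2 <= k <= n + 1]: it is shifted by one. *)
Lemma cnt_count_upto (P : nat -> Prop) n : cnt P n = count_upto (fun k => P (S k)) n.
Proof. induction n; cbn; [reflexivity|]. rewrite IHn. reflexivity. Qed.

Lemma is_lim_seq_cnt (P : nat -> Prop) (l : R) :
  is_lim_seq (fun n => count_upto (fun k => P (S k)) n / INR n) l ->
  is_lim_seq (fun n => cnt P n / INR n) l.
Proof. apply is_lim_seq_ext. intros n. rewrite cnt_count_upto. reflexivity. Qed.

Lemma count_upto_S (P : nat -> Prop) n : count_upto P (S n) = count_upto P n + ind (P (S n)).
Proof. reflexivity. Qed.

Lemma count_upto_bounds (P : nat -> Prop) n : 0 <= count_upto P n <= INR n.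
Proof.
  induction n; cbn [count_upto]; [cbn; lra|].
  rewrite S_INR. pose proof (ind_bounds (P (S n))). lra.
Qed.

Lemma count_upto_all n : count_upto (fun _ => True) n = INR n.
Proof. induction n; [reflexivity|]. rewrite count_upto_S, IHn, ind_true, S_INR; auto. Qed.

Lemma count_upto_mono (P Q : nat -> Prop) n :
  (forall k, P k -> Q k) -> count_upto P n <= count_upto Q n.
Proof.
  intros H. induction n; cbn [count_upto]; [lra|].
  pose proof (ind_mono (P (S n)) (Q (S n)) (H _)). lra.
Qed.

Lemma count_upto_ext (P Q : nat -> Prop) n :
  (forall k, P k <-> Q k) -> count_upto P n = count_upto Q n.
Proof. intros H. apply Rle_antisym; apply count_upto_mono; firstorder. Qed.

Lemma count_upto_mono_eventually (P Q : nat -> Prop) :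
  eventually (fun k => P k -> Q k) ->
  exists K0, forall n, count_upto P n <= count_upto Q n + INR K0.
Proof.
  intros [K0 HK]. exists K0. intros n. induction n; cbn [count_upto]; [pose proof (pos_INR K0); lra|].
  destruct (le_lt_dec K0 (S n)) as [Hk|Hk].
  - pose proof (ind_mono (P (S n)) (Q (S n)) (HK _ Hk)). lra.
  - pose proof (count_upto_bounds P (S n)). pose proof (count_upto_bounds Q (S n)).
    assert (INR (S n) <= INR K0) by (apply le_INR; lia).
    rewrite count_upto_S in *. lra.
Qed.

Fixpoint sumR (f : nat -> R) (N : nat) : R :=
  match N with O => 0 | S N' => sumR f N' + f N' end.

Lemma sumR_plus f g N : sumR (fun i => f i + g i) N = sumR f N + sumR g N.
Proof. induction N; cbn; [lra|]. rewrite IHN. ring. Qed.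

Lemma sumR_le f g N : (forall i, (i < N)%nat -> f i <= g i) -> sumR f N <= sumR g N.
Proof.
  induction N; cbn; intros H; [lra|].
  pose proof (H N ltac:(lia)). pose proof (IHN ltac:(intros; apply H; lia)). lra.
Qed.

Lemma sumR_const a N : sumR (fun _ => a) N = INR N * a.
Proof. induction N; cbn [sumR]; [cbn; ring|]. rewrite IHN, S_INR. ring. Qed.

Lemma sumR_nonneg f N : (forall i, 0 <= f i) -> 0 <= sumR f N.
Proof. intros H; induction N; cbn; [lra|]. pose proof (H N); lra. Qed.

Lemma count_upto_le_sum (Q : nat -> Prop) (P : nat -> nat -> Prop) N n :
  (forall k, ind (Q k) <= sumR (fun i => ind (P i k)) N) ->
  count_upto Q n <= sumR (fun i => count_upto (P i) n) N.
Proof.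
  intros H. induction n; cbn [count_upto].
  - rewrite sumR_const. lra.
  - rewrite sumR_plus. pose proof (H (S n)). lra.
Qed.

Lemma sum_le_count_upto (Q : nat -> Prop) (P : nat -> nat -> Prop) N n :
  (forall k, sumR (fun i => ind (P i k)) N <= ind (Q k)) ->
  sumR (fun i => count_upto (P i) n) N <= count_upto Q n.
Proof.
  intros H. induction n; cbn [count_upto].
  - rewrite sumR_const. lra.
  - rewrite sumR_plus. pose proof (H (S n)). lra.
Qed.

Lemma sum_ind_0 (Q : nat -> Prop) N :
  (forall i, (i < N)%nat -> ~ Q i) -> sumR (fun i => ind (Q i)) N = 0.
Proof.
  induction N; intros H; cbn; [reflexivity|].
  rewrite IHN, ind_false by (auto || (intros; apply H; lia)). ring.
Qed.

Lemma sum_ind_le1 (Q : nat -> Prop) N :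
  (forall i j, (i < N)%nat -> (j < N)%nat -> Q i -> Q j -> i = j) ->
  sumR (fun i => ind (Q i)) N <= 1.
Proof.
  induction N; intros H; cbn; [lra|].
  destruct (classic (Q N)) as [HQ|HQ].
  - rewrite sum_ind_0, ind_true by (auto || (intros i Hi HQi; specialize (H i N ltac:(lia)
      ltac:(lia) HQi HQ); lia)). lra.
  - rewrite ind_false by exact HQ. rewrite Rplus_0_r. apply IHN. intros; apply H; auto; lia.
Qed.

Lemma sum_ind_ge1 (Q : nat -> Prop) N : (exists i, (i < N)%nat /\ Q i) ->
  1 <= sumR (fun i => ind (Q i)) N.
Proof.
  intros [i [Hi HQ]]. induction N; [lia|]. cbn.
  pose proof (sumR_nonneg (fun i => ind (Q i)) N (fun i => proj1 (ind_bounds (Q i)))).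
  destruct (Nat.eq_dec i N) as [->|Hne].
  - rewrite ind_true by exact HQ. lra.
  - pose proof (IHN ltac:(lia)). pose proof (ind_bounds (Q N)). lra.
Qed.

Lemma count_upto_shift1 (G : R -> Prop) n :
  count_upto (fun k => G (INR k + 1)) n + ind (G 1) = count_upto (fun k => G (INR k)) (S n).
Proof.
  induction n.
  - cbn. replace (0 + 1) with 1 by ring. ring.
  - rewrite (count_upto_S (fun k => G (INR k + 1))), (count_upto_S (fun k => G (INR k)) (S n)).
    rewrite <- IHn, <- S_INR. ring.
Qed.

Lemma count_upto_shift (g : R -> Prop) d n :
  Rabs (count_upto (fun k => g (INR k + INR d)) n - count_upto (fun k => g (INR k)) n) <= INR d.
Proof.
  induction d.
  - rewrite (count_upto_ext _ (fun k => g (INR k))) by (intros k; cbn; rewrite Rplus_0_r; tauto).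
    rewrite Rminus_diag, Rabs_R0. cbn; lra.
  - pose proof (count_upto_shift1 (fun x => g (x + INR d)) n) as H1.
    cbv beta in H1. rewrite count_upto_S in H1.
    rewrite (count_upto_ext (fun k => g (INR k + INR (S d))) (fun k => g (INR k + 1 + INR d)))
      by (intros k; rewrite S_INR; replace (INR k + 1 + INR d) with (INR k + (INR d + 1)) by ring;
          tauto).
    pose proof (ind_bounds (g (1 + INR d))). pose proof (ind_bounds (g (INR (S n) + INR d))).
    rewrite S_INR. apply Rabs_le_between in IHd. apply Rabs_le_between. lra.
Qed.

Lemma count_upto_shift_neg (g : R -> Prop) d n :
  Rabs (count_upto (fun k => g (INR k - INR d)) n - count_upto (fun k => g (INR k)) n) <= INR d.
Proof.
  pose proof (count_upto_shift (fun x => g (x - INR d)) d n) as H. cbv beta in H.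
  rewrite (count_upto_ext (fun k => g (INR k + INR d - INR d)) (fun k => g (INR k))) in H
    by (intros k; replace (INR k + INR d - INR d) with (INR k) by ring; tauto).
  rewrite Rabs_minus_sym. exact H.
Qed.

Definition density_le (E : nat -> Prop) (x : R) : Prop :=
  forall y, x < y -> eventually (fun n => count_upto E n <= y * INR n).

Definition density_ge (E : nat -> Prop) (x : R) : Prop :=
  forall y, y < x -> eventually (fun n => y * INR n <= count_upto E n).

Lemma is_lim_density E l : density_le E l -> density_ge E l ->
  is_lim_seq (fun n => count_upto E n / INR n) l.
Proof.
  intros Hle Hge. apply is_lim_seq_spec. intros eps. pose proof (cond_pos eps).
  destruct (Hle (l + eps / 2) ltac:(lra)) as [N1 H1].
  destruct (Hge (l - eps / 2) ltac:(lra)) as [N2 H2].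
  exists (S (N1 + N2)). intros n Hn.
  specialize (H1 n ltac:(lia)). specialize (H2 n ltac:(lia)).
  assert (Hn0 : 0 < INR n) by (apply lt_0_INR; lia).
  apply Rabs_def1; apply (Rmult_lt_reg_r (INR n)); try exact Hn0;
    unfold Rdiv; rewrite Rmult_minus_distr_r, Rmult_assoc, Rinv_l, Rmult_1_r by lra; nra.
Qed.

Lemma eventually_le_mult_INR K e : 0 < e -> eventually (fun n => K <= e * INR n).
Proof.
  intros He. destruct (eventually_INR_gt (K / e)) as [N HN]. exists N. intros n Hn.
  specialize (HN n Hn). apply (Rmult_lt_compat_l e) in HN; [|exact He].
  replace (e * (K / e)) with K in HN by (field; lra). lra.
Qed.

Lemma density_le_sub E F x : eventually (fun k => E k -> F k) -> density_le F x -> density_le E x.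
Proof.
  intros HEF HF y Hy. destruct (count_upto_mono_eventually E F HEF) as [K0 HK0].
  destruct (HF ((x + y) / 2) ltac:(lra)) as [N1 H1].
  destruct (eventually_le_mult_INR (INR K0) ((y - x) / 2) ltac:(lra)) as [N2 H2].
  exists (N1 + N2)%nat. intros n Hn.
  specialize (H1 n ltac:(lia)). specialize (H2 n ltac:(lia)). specialize (HK0 n). lra.
Qed.

Lemma density_ge_sub E F x : eventually (fun k => F k -> E k) -> density_ge F x -> density_ge E x.
Proof.
  intros HFE HF y Hy. destruct (count_upto_mono_eventually F E HFE) as [K0 HK0].
  destruct (HF ((x + y) / 2) ltac:(lra)) as [N1 H1].
  destruct (eventually_le_mult_INR (INR K0) ((x - y) / 2) ltac:(lra)) as [N2 H2].
  exists (N1 + N2)%nat. intros n Hn.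
  specialize (H1 n ltac:(lia)). specialize (H2 n ltac:(lia)). specialize (HK0 n). lra.
Qed.

(** * Irrational rotations *)

Lemma nat_grid d l : 0 < d -> 0 <= l -> exists J : nat, INR J * d <= l < (INR J + 1) * d.
Proof.
  intros Hd Hl. destruct (nat_floor (l / d)) as [J HJ]; [apply Rdiv_le_0_compat; lra|].
  pose proof (base_fp (l / d)). exists J.
  replace l with ((INR J + frac_part (l / d)) * d) by (rewrite <- HJ; field; lra). split; nra.
Qed.

Definition irrational (x : R) : Prop := ~ exists q : Q, x = Q2R q.

Lemma irrational_nat_mul th (p : Z) (q : nat) :
  irrational th -> (1 <= q)%nat -> INR q * th <> IZR p.
Proof.
  intros H Hq E. apply H. destruct q as [|q']; [lia|].
  exists (Qmake p (Pos.of_succ_nat q')). unfold Q2R. cbn [Qnum Qden].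
  rewrite Zpos_P_of_succ_nat, <- Nat2Z.inj_succ, <- INR_IZR_INZ.
  assert (0 < INR (S q')) by (apply lt_0_INR; lia).
  apply (Rmult_eq_reg_l (INR (S q'))); [|lra]. rewrite E. field. lra.
Qed.

(* Pigeonhole on the [N] cells [[i/N, (i+1)/N)] for the [N + 1] points
   [frac_part (k th)], [k <= N]. *)
Lemma frac_parts_close th N : (0 < N)%nat ->
  exists i j, (i < j)%nat /\ Rabs (frac_part (INR j * th) - frac_part (INR i * th)) < / INR N.
Proof.
  intros HN. assert (HNr : 0 < INR N) by (apply lt_0_INR, HN).
  set (fr := fun k : nat => frac_part (INR k * th)).
  assert (Hfr : forall k, 0 <= fr k < 1) by (intros k; unfold fr; pose proof (base_fp (INR k * th)); lra).
  set (cell := fun k : nat => Z.to_nat (Int_part (INR N * fr k))).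
  assert (Hcell : forall k, INR (cell k) <= INR N * fr k < INR (cell k) + 1).
  { intros k. pose proof (Hfr k).
    pose proof (Rplus_Int_part_frac_part (INR N * fr k)). pose proof (base_fp (INR N * fr k)).
    assert (Hm1 : -1 < IZR (Int_part (INR N * fr k))) by nra. apply lt_IZR in Hm1.
    unfold cell. rewrite INR_IZR_INZ, Z2Nat.id by lia. lra. }
  assert (Hlt : forall k, (cell k < N)%nat).
  { intros k. apply INR_lt. pose proof (Hcell k). pose proof (Hfr k). nra. }
  assert (Hdup : exists a b, a <> b /\ cell a = cell b).
  { apply NNPP. intros Hn.
    assert (Hnd : NoDup (map cell (seq 0 (S N)))).
    { apply NoDup_map_NoDup_ForallPairs; [|apply seq_NoDup].
      intros a b _ _ Hab. destruct (Nat.eq_dec a b); auto. exfalso. apply Hn. eauto. }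
    apply NoDup_incl_length with (l' := seq 0 N) in Hnd.
    - rewrite length_map, !length_seq in Hnd. lia.
    - intros x Hx. apply in_map_iff in Hx. destruct Hx as [k [<- _]].
      apply in_seq. pose proof (Hlt k). lia. }
  destruct Hdup as [a [b [Hab Hc]]].
  assert (Hclose : forall i j, cell i = cell j -> Rabs (fr j - fr i) < / INR N).
  { intros i j Hij. pose proof (Hcell i) as Ci. pose proof (Hcell j) as Cj. rewrite Hij in Ci.
    apply (Rmult_lt_reg_l (INR N)); [exact HNr|]. rewrite Rinv_r by lra.
    rewrite <- (Rabs_right (INR N)) at 1 by lra. rewrite <- Rabs_mult.
    apply Rabs_def1; lra. }
  destruct (Nat.lt_gt_cases a b) as [[H|H] _]; [exact Hab|..].
  - exists a, b. split; [exact H|]. apply Hclose, Hc.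
  - exists b, a. split; [exact H|]. apply Hclose. auto.
Qed.

Lemma dirichlet th eps : irrational th -> 0 < eps ->
  exists q m d, (1 <= q)%nat /\ INR q * th = d + IZR m /\ 0 < Rabs d < eps.
Proof.
  intros Hirr Heps.
  destruct (eventually_INR_gt (/ eps)) as [N0 HN0]. set (N := S N0).
  specialize (HN0 N ltac:(unfold N; lia)).
  assert (HNpos : 0 < INR N) by (pose proof (Rinv_0_lt_compat eps Heps); lra).
  destruct (frac_parts_close th N ltac:(unfold N; lia)) as [i [j [Hij Hclose]]].
  set (d := frac_part (INR j * th) - frac_part (INR i * th)) in *.
  exists (j - i)%nat, (Int_part (INR j * th) - Int_part (INR i * th))%Z, d.
  assert (Heq : INR (j - i) * th = d + IZR (Int_part (INR j * th) - Int_part (INR i * th))).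
  { rewrite minus_INR, minus_IZR by lia. unfold d.
    pose proof (Rplus_Int_part_frac_part (INR j * th)).
    pose proof (Rplus_Int_part_frac_part (INR i * th)). lra. }
  repeat split; [lia|exact Heq| |].
  - apply Rabs_pos_lt. intros H0. rewrite H0, Rplus_0_l in Heq.
    eapply irrational_nat_mul; [exact Hirr| |exact Heq]. lia.
  - eapply Rlt_trans; [exact Hclose|]. rewrite <- (Rinv_inv eps).
    apply Rinv_lt_contravar; [|exact HN0]. apply Rmult_lt_0_compat; [apply Rinv_0_lt_compat|]; lra.
Qed.

Definition arc (th c u l : R) (k : nat) : Prop := frac_part (INR k * th + c - u) < l.

Lemma frac_part_grid_iff x u d i : 0 < d -> (INR i + 1) * d <= 1 ->
  (frac_part (x - (u + INR i * d)) < d <->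
   INR i * d <= frac_part (x - u) < (INR i + 1) * d).
Proof.
  intros Hd Hi. pose proof (Rplus_Int_part_frac_part (x - u)). pose proof (base_fp (x - u)).
  set (t := frac_part (x - u)) in *. pose proof (pos_INR i).
  assert (0 <= INR i * d) by nra.
  destruct (Rle_lt_dec (INR i * d) t) as [Ht|Ht].
  - replace (frac_part (x - (u + INR i * d))) with (t - INR i * d); [split; intros; lra|].
    apply (Int_part_frac_part_spec _ (Int_part (x - u))); lra.
  - replace (frac_part (x - (u + INR i * d))) with (t - INR i * d + 1); [split; intros; lra|].
    apply (Int_part_frac_part_spec _ (Int_part (x - u) - 1)); [lra|]. rewrite minus_IZR. lra.
Qed.

Lemma frac_part_grid x u d i : 0 < d ->
  INR i * d <= frac_part (x - u) < (INR i + 1) * d -> frac_part (x - (u + INR i * d)) < d.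
Proof.
  intros Hd Hi. pose proof (Rplus_Int_part_frac_part (x - u)). pose proof (base_fp (x - u)).
  replace (frac_part (x - (u + INR i * d))) with (frac_part (x - u) - INR i * d); [lra|].
  apply (Int_part_frac_part_spec _ (Int_part (x - u))); [|lra].
  pose proof (pos_INR i). split; nra.
Qed.

Lemma grid_arc_exists x u d : 0 < d ->
  exists i : nat, INR i * d <= frac_part (x - u) < (INR i + 1) * d.
Proof. intros Hd. pose proof (base_fp (x - u)). apply nat_grid; lra. Qed.

Lemma grid_arcs_disjoint x u d N : 0 < d -> INR N * d <= 1 ->
  forall i j, (i < N)%nat -> (j < N)%nat ->
  frac_part (x - (u + INR i * d)) < d -> frac_part (x - (u + INR j * d)) < d -> i = j.
Proof.
  intros Hd HN i j Hi Hj H1 H2.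
  assert (HS : forall k, (k < N)%nat -> (INR k + 1) * d <= 1).
  { intros k Hk. rewrite <- S_INR. apply le_INR in Hk. nra. }
  apply frac_part_grid_iff in H1, H2; auto.
  destruct (Nat.lt_total i j) as [H|[H|H]]; auto; exfalso;
    rewrite <- Nat.le_succ_l in H; apply le_INR in H; rewrite S_INR in H; nra.
Qed.

(* Since q th = d + m, translating the arc by [i |d|] amounts to shifting the
   index by [i q]. *)
Lemma count_arc_translate th c q m d u i n : INR q * th = d + IZR m ->
  Rabs (count_upto (arc th c (u + INR i * Rabs d) (Rabs d)) n -
        count_upto (arc th c u (Rabs d)) n) <= INR (i * q).
Proof.
  intros Hq. set (g := fun x => frac_part (x * th + c - u) < Rabs d).
  rewrite (count_upto_ext (arc th c u (Rabs d)) (fun k => g (INR k))) by (intros; unfold g, arc; tauto).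
  destruct (Rle_lt_dec 0 d) as [Hd|Hd].
  - rewrite (count_upto_ext _ (fun k => g (INR k - INR (i * q)))); [apply count_upto_shift_neg|].
    intros k. unfold arc, g. rewrite Rabs_right by lra.
    replace (INR k * th + c - (u + INR i * d)) with
      ((INR k - INR (i * q)) * th + c - u + IZR (Z.of_nat i * m)); [rewrite frac_part_plus_IZR; tauto|].
    rewrite mult_IZR, <- INR_IZR_INZ, mult_INR.
    replace (INR i * d) with (INR i * (INR q * th - IZR m)) by (rewrite Hq; ring). ring.
  - rewrite (count_upto_ext _ (fun k => g (INR k + INR (i * q)))); [apply count_upto_shift|].
    intros k. unfold arc, g. rewrite Rabs_left by lra.
    replace (INR k * th + c - (u + INR i * - d)) with
      ((INR k + INR (i * q)) * th + c - u + IZR (- (Z.of_nat i * m))); [rewrite frac_part_plus_IZR; tauto|].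
    rewrite opp_IZR, mult_IZR, <- INR_IZR_INZ, mult_INR.
    replace (INR i * - d) with (- (INR i * (INR q * th - IZR m))) by (rewrite Hq; ring). ring.
Qed.

Section GridArcs.

Variables (th c : R) (q : nat) (m : Z) (d : R) (P : nat).
Hypothesis Hq : INR q * th = d + IZR m.
Hypothesis Hd : 0 < Rabs d <= 1/2.
Hypothesis HP : INR P * Rabs d <= 1 < (INR P + 1) * Rabs d.

(* The [P] (resp. [P + 1]) translates of an arc of length [|d|] are disjoint
   (resp. cover the circle), and each one is counted like the original arc
   up to [P q] (resp. [(P + 1) q]). *)
Lemma count_small_arc_upper u n :
  INR P * count_upto (arc th c u (Rabs d)) n <= INR n + INR P * INR (P * q).
Proof.
  set (dl := Rabs d) in *.
  assert (S1 : sumR (fun i => count_upto (arc th c (u + INR i * dl) dl) n) P <= INR n).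
  { rewrite <- (count_upto_all n). apply sum_le_count_upto. intros k. rewrite (ind_true True) by auto.
    apply sum_ind_le1. intros i j Hi Hj. unfold arc.
    apply (grid_arcs_disjoint (INR k * th + c) u dl P); auto; lra. }
  assert (S2 : INR P * (count_upto (arc th c u dl) n - INR (P * q)) <=
               sumR (fun i => count_upto (arc th c (u + INR i * dl) dl) n) P).
  { rewrite <- sumR_const. apply sumR_le. intros i Hi.
    pose proof (count_arc_translate th c q m d u i n Hq) as T. fold dl in T. apply Rabs_le_between in T.
    assert (INR (i * q) <= INR (P * q)) by (apply le_INR, Nat.mul_le_mono_r; lia). lra. }
  lra.
Qed.

Lemma count_small_arc_lower u n :
  INR n <= INR (S P) * (count_upto (arc th c u (Rabs d)) n + INR (S P * q)).
Proof.
  set (dl := Rabs d) in *.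
  assert (S1 : INR n <= sumR (fun i => count_upto (arc th c (u + INR i * dl) dl) n) (S P)).
  { rewrite <- (count_upto_all n). apply count_upto_le_sum. intros k. rewrite (ind_true True) by auto.
    apply sum_ind_ge1. destruct (grid_arc_exists (INR k * th + c) u dl ltac:(lra)) as [i Hi].
    exists i. split.
    - assert (H0 : INR i * dl < (INR P + 1) * dl) by (pose proof (base_fp (INR k * th + c - u)); lra).
      apply Rmult_lt_reg_r in H0; [|lra]. rewrite <- S_INR in H0. apply INR_lt in H0. exact H0.
    - unfold arc. apply frac_part_grid; [lra|exact Hi]. }
  assert (S2 : sumR (fun i => count_upto (arc th c (u + INR i * dl) dl) n) (S P) <=
      INR (S P) * (count_upto (arc th c u dl) n + INR (S P * q))).
  { rewrite <- sumR_const. apply sumR_le. intros i Hi.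
    pose proof (count_arc_translate th c q m d u i n Hq) as T. fold dl in T. apply Rabs_le_between in T.
    assert (INR (i * q) <= INR (S P * q)) by (apply le_INR, Nat.mul_le_mono_r; lia). lra. }
  lra.
Qed.

Variables (l : R) (J : nat).
Hypothesis HJ : INR J * Rabs d <= l < (INR J + 1) * Rabs d.

Lemma grid_size_pos : (1 <= P)%nat.
Proof. destruct P; [cbn in HP; lra|lia]. Qed.

Lemma count_arc_upper u n :
  count_upto (arc th c u l) n <= INR (S J) * (INR n / INR P + INR (P * q)).
Proof.
  set (dl := Rabs d) in *.
  assert (HPr : 0 < INR P) by (apply lt_0_INR; pose proof grid_size_pos; lia).
  eapply Rle_trans; [apply (count_upto_le_sum _ (fun i => arc th c (u + INR i * dl) dl) (S J))|].
  - intros k. destruct (classic (arc th c u l k)) as [Ha|Ha].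
    + rewrite ind_true by exact Ha. apply sum_ind_ge1.
      destruct (grid_arc_exists (INR k * th + c) u dl ltac:(lra)) as [i Hi].
      exists i. split.
      * unfold arc in Ha. assert (H0 : INR i * dl < (INR J + 1) * dl) by lra.
        apply Rmult_lt_reg_r in H0; [|lra]. rewrite <- S_INR in H0. apply INR_lt, H0.
      * unfold arc. apply frac_part_grid; [lra|exact Hi].
    + rewrite ind_false by exact Ha. apply sumR_nonneg. intros; apply ind_bounds.
  - rewrite <- sumR_const. apply sumR_le. intros i Hi.
    pose proof (count_small_arc_upper (u + INR i * dl) n) as U. fold dl in U.
    apply (Rmult_le_reg_l (INR P)); [exact HPr|].
    replace (INR P * (INR n / INR P + INR (P * q))) with (INR n + INR P * INR (P * q))
      by (field; lra).
    exact U.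
Qed.

Lemma count_arc_lower u n : l <= 1 ->
  INR J * (INR n / INR (S P) - INR (S P * q)) <= count_upto (arc th c u l) n.
Proof.
  intros Hl1. set (dl := Rabs d) in *.
  assert (HPr : 0 < INR (S P)) by (apply lt_0_INR; lia).
  eapply Rle_trans; [|apply (sum_le_count_upto _ (fun i => arc th c (u + INR i * dl) dl) J)].
  - rewrite <- sumR_const. apply sumR_le. intros i Hi.
    pose proof (count_small_arc_lower (u + INR i * dl) n) as L. fold dl in L.
    apply (Rmult_le_reg_l (INR (S P))); [exact HPr|].
    replace (INR (S P) * (INR n / INR (S P) - INR (S P * q)))
      with (INR n - INR (S P) * INR (S P * q)) by (field; lra).
    lra.
  - intros k. destruct (classic (arc th c u l k)) as [Ha|Ha].
    + rewrite ind_true by exact Ha. apply sum_ind_le1. intros i j Hi Hj. unfold arc.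
      apply (grid_arcs_disjoint (INR k * th + c) u dl J); auto; lra.
    + rewrite ind_false by exact Ha. rewrite sum_ind_0; [lra|]. intros i Hi Hc. apply Ha.
      unfold arc in *. rewrite <- Nat.le_succ_l in Hi. apply le_INR in Hi. rewrite S_INR in Hi.
      apply frac_part_grid_iff in Hc; nra.
Qed.

End GridArcs.

Lemma dirichlet_grid th l delta : irrational th -> 0 <= l -> 0 < delta ->
  exists q m d P J, INR q * th = d + IZR m /\ 0 < Rabs d <= 1/2 /\ Rabs d < delta /\
    INR P * Rabs d <= 1 < (INR P + 1) * Rabs d /\ INR J * Rabs d <= l < (INR J + 1) * Rabs d.
Proof.
  intros Hirr Hl Hdelta.
  destruct (dirichlet th (Rmin (1/2) delta) Hirr ltac:(apply Rmin_glb_lt; lra))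
    as [q [m [d [_ [Hq Hd]]]]].
  pose proof (Rmin_l (1/2) delta). pose proof (Rmin_r (1/2) delta).
  destruct (nat_grid (Rabs d) 1 ltac:(lra) ltac:(lra)) as [P HP].
  destruct (nat_grid (Rabs d) l ltac:(lra) Hl) as [J HJ].
  exists q, m, d, P, J. repeat split; lra.
Qed.

Lemma arc_density_le th c u l : irrational th -> 0 <= l <= 1 -> density_le (arc th c u l) l.
Proof.
  intros Hirr Hl y Hy.
  destruct (dirichlet_grid th l ((y - l) / 8) Hirr (proj1 Hl) ltac:(lra))
    as [q [m [d [P [J [Hq [Hd [Hdy [HP HJ]]]]]]]]].
  pose proof (grid_size_pos d P Hd HP) as HP1.
  assert (HPr : 0 < INR P) by (apply lt_0_INR; lia).
  set (dl := Rabs d) in *.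
  assert (Hhi : INR (S J) <= (l + 4 * dl) * INR P).
  { rewrite S_INR. apply (Rmult_le_reg_r dl); [lra|].
    assert ((l + 4 * dl) * (INR P * dl) >= (l + 4 * dl) * (1 - dl))
      by (apply Rle_ge, Rmult_le_compat_l; lra).
    nra. }
  destruct (eventually_le_mult_INR (INR (S J) * INR (P * q)) ((y - l) / 2) ltac:(lra)) as [N HN].
  exists N. intros n Hn. specialize (HN n Hn). pose proof (pos_INR n).
  pose proof (count_arc_upper th c q m d P Hq Hd HP l J HJ u n) as U. fold dl in U.
  replace (INR (S J) * (INR n / INR P + INR (P * q)))
    with (INR (S J) / INR P * INR n + INR (S J) * INR (P * q)) in U by (field; lra).
  assert (INR (S J) / INR P <= l + 4 * dl).
  { apply (Rmult_le_reg_r (INR P)); [exact HPr|].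
    replace (INR (S J) / INR P * INR P) with (INR (S J)) by (field; lra). exact Hhi. }
  nra.
Qed.

Lemma arc_density_ge th c u l : irrational th -> 0 <= l <= 1 -> density_ge (arc th c u l) l.
Proof.
  intros Hirr Hl y Hy.
  destruct (dirichlet_grid th l ((l - y) / 4) Hirr (proj1 Hl) ltac:(lra))
    as [q [m [d [P [J [Hq [Hd [Hdy [HP HJ]]]]]]]]].
  assert (HSP : 0 < INR (S P)) by (apply lt_0_INR; lia).
  set (dl := Rabs d) in *.
  assert (Hlo : l - 2 * dl <= INR J / INR (S P)).
  { destruct (Rle_lt_dec (l - 2 * dl) 0) as [Hneg|Hpos].
    - assert (0 <= INR J / INR (S P)) by (apply Rdiv_le_0_compat; [apply pos_INR|lra]). lra.
    - apply (Rmult_le_reg_r (INR (S P))); [exact HSP|].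
      replace (INR J / INR (S P) * INR (S P)) with (INR J) by (field; lra).
      apply (Rmult_le_reg_r dl); [lra|]. rewrite S_INR.
      assert ((l - 2 * dl) * ((INR P + 1) * dl) <= (l - 2 * dl) * (1 + dl))
        by (apply Rmult_le_compat_l; lra).
      nra. }
  destruct (eventually_le_mult_INR (INR J * INR (S P * q)) ((l - y) / 2) ltac:(lra)) as [N HN].
  exists N. intros n Hn. specialize (HN n Hn). pose proof (pos_INR n).
  pose proof (count_arc_lower th c q m d P Hq Hd HP l J HJ u n (proj2 Hl)) as L. fold dl in L.
  replace (INR J * (INR n / INR (S P) - INR (S P * q)))
    with (INR J / INR (S P) * INR n - INR J * INR (S P * q)) in L by (field; lra).
  nra.
Qed.

Definition near_linear (y : nat -> R) (th c : R) : Prop :=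
  is_lim_seq (fun k => y k - (INR k * th + c)) 0.

Lemma near_linear_eventually y th c eta : near_linear y th c -> 0 < eta ->
  eventually (fun k => Rabs (y k - (INR k * th + c)) < eta).
Proof.
  intros H Heta. apply is_lim_seq_spec in H. destruct (H (mkposreal eta Heta)) as [N HN].
  exists N. intros k Hk. specialize (HN k Hk). cbn in HN. rewrite Rminus_0_r in HN. exact HN.
Qed.

Lemma near_linear_shift y th c : near_linear y th c -> near_linear (fun k => y (S k)) th (c + th).
Proof.
  intros H. apply is_lim_seq_incr_1 in H.
  eapply is_lim_seq_ext; [|exact H]. intros k. cbv beta. rewrite S_INR. ring.
Qed.

(* The window condition squeezes [E] between two arcs of the rotation by [th]
   whose lengths differ from [l] by at most [4 eta]. *)
Lemma frac_window_density th c y E u l : irrational th -> 0 <= l <= 1 ->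
  near_linear y th c -> frac_window y E u l ->
  is_lim_seq (fun n => count_upto E n / INR n) l.
Proof.
  intros Hirr Hl Hy HE. apply is_lim_density.
  - intros z Hz. destruct (Rle_lt_dec z 1) as [Hz1|Hz1].
    2:{ exists 0%nat. intros n _. pose proof (count_upto_bounds E n). pose proof (pos_INR n). nra. }
    set (eta := (z - l) / 8).
    assert (Hsub : eventually (fun k => E k -> arc th c (u - 2 * eta) (l + 4 * eta) k)).
    { destruct (near_linear_eventually y th c eta Hy ltac:(unfold eta; lra)) as [N1 H1].
      destruct (HE eta ltac:(unfold eta; lra)) as [N2 H2].
      exists (N1 + N2)%nat. intros k Hk HEk. unfold arc.
      specialize (H1 k ltac:(lia)). apply (proj2 (H2 k ltac:(lia))) in HEk.
      apply Rabs_def2 in H1.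
      replace (INR k * th + c - (u - 2 * eta))
        with ((y k - u + eta) + (eta - (y k - (INR k * th + c)))) by ring.
      pose proof (frac_part_plus_le (y k - u + eta) (eta - (y k - (INR k * th + c))) ltac:(lra)).
      lra. }
    apply (density_le_sub _ _ (l + 4 * eta) Hsub); [|unfold eta; lra].
    apply arc_density_le; [exact Hirr|unfold eta; lra].
  - intros z Hz. destruct (Rle_lt_dec z 0) as [Hz0|Hz0].
    { exists 0%nat. intros n _. pose proof (count_upto_bounds E n). pose proof (pos_INR n). nra. }
    set (eta := (l - z) / 8).
    assert (Hsub : eventually (fun k => arc th c (u + 2 * eta) (l - 4 * eta) k -> E k)).
    { destruct (near_linear_eventually y th c eta Hy ltac:(unfold eta; lra)) as [N1 H1].
      destruct (HE eta ltac:(unfold eta; lra)) as [N2 H2].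
      exists (N1 + N2)%nat. intros k Hk Ha. unfold arc in Ha.
      specialize (H1 k ltac:(lia)). apply (proj1 (H2 k ltac:(lia))).
      apply Rabs_def2 in H1.
      replace (y k - u - eta)
        with ((INR k * th + c - (u + 2 * eta)) + (eta + (y k - (INR k * th + c)))) by ring.
      pose proof (frac_part_plus_le (INR k * th + c - (u + 2 * eta))
                    (eta + (y k - (INR k * th + c))) ltac:(lra)).
      lra. }
    apply (density_ge_sub _ _ (l - 4 * eta) Hsub); [|unfold eta; lra].
    apply arc_density_ge; [exact Hirr|unfold eta; lra].
Qed.

(** * The inverse of the interpolating function *)

Lemma frakF_continuous : continuity frakF.
Proof. unfold frakF, Rpower. reg. Qed.

Lemma Rpower_phi_le1 x : x <= 0 -> Rpower phi x <= 1.
Proof.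
  intros Hx. pose proof phi_bounds. rewrite <- (Rpower_O phi) by lra. apply Rle_Rpower; lra.
Qed.

Lemma frakF_decomp x : 0 <= x -> exists e, Rabs e <= 1 /\ frakF x = rho * (Rpower phi x + e).
Proof.
  intros Hx. exists (Rpower phi (- x) * cos (PI * x) * Rpower phi (-2)). split.
  - pose proof (Rpower_phi_le1 (- x) ltac:(lra)). pose proof (Rpower_phi_le1 (-2) ltac:(lra)).
    pose proof (Rpower_phi_pos (- x)). pose proof (Rpower_phi_pos (-2)).
    rewrite !Rabs_mult, (Rabs_right (Rpower phi (- x))), (Rabs_right (Rpower phi (-2))) by lra.
    assert (Rabs (cos (PI * x)) <= 1) by (apply Rabs_le, COS_bound).
    pose proof (Rabs_pos (cos (PI * x))).
    assert (Rpower phi (- x) * Rabs (cos (PI * x)) <= 1) by nra. nra.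
  - reflexivity.
Qed.

Lemma frakF_1 : frakF 1 = 1.
Proof.
  unfold frakF. pose proof phi_bounds. pose proof phi_sq.
  rewrite Rpower_1, Rpower_Ropp, Rpower_1 by lra.
  replace (-2) with (- INR 2) by (cbn; ring). rewrite Rpower_Ropp, Rpower_pow, Rmult_1_r, cos_PI by lra.
  replace (sqrt 5) with (2 * phi - 1) by (unfold phi; lra).
  field_simplify; [|lra..].
  replace (phi ^ 4) with (3 * phi + 2) by (cbn; nra).
  replace (phi ^ 3) with (2 * phi + 1) by (cbn; nra).
  replace (phi ^ 2) with (phi + 1) by (cbn; nra).
  field. lra.
Qed.

Lemma rho_gt_half : 1/2 < rho.
Proof.
  unfold rho. pose proof phi_bounds. pose proof sqrt5_bounds.
  apply (Rmult_lt_reg_r (sqrt 5)); [lra|].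
  replace (phi / sqrt 5 * sqrt 5) with phi by (field; lra). lra.
Qed.

Lemma frakF_surj y : 1 <= y -> exists x, 1 <= x /\ frakF x = y.
Proof.
  intros Hy. pose proof rho_gt_half. pose proof phi_bounds.
  set (X := 2 + logphi (y / rho + 1)).
  assert (Hyr : 0 <= y / rho) by (apply Rdiv_le_0_compat; lra).
  assert (HX0 : 0 <= logphi (y / rho + 1)).
  { rewrite <- (logphi_Rpower 0), Rpower_O by lra. apply logphi_le; [lra|].
    lra. }
  assert (HFX : y <= frakF X).
  { destruct (frakF_decomp X ltac:(unfold X; lra)) as [e [He HF]]. rewrite HF.
    assert (HRX : Rpower phi X = phi ^ 2 * (y / rho + 1)).
    { unfold X. replace 2 with (INR 2) at 1 by (cbn; ring).
      rewrite Rpower_plus, Rpower_pow, Rpower_logphi by lra. reflexivity. }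
    assert (phi ^ 2 >= 2) by (cbn; nra).
    apply Rabs_le_between in He.
    assert (y = rho * (y / rho)) by (field; lra). nra. }
  destruct (IVT_cor (fun x => frakF x - y) 1 X) as [z [Hz1 Hz2]].
  - apply continuity_minus; [apply frakF_continuous|apply continuity_const; intros ? ?; auto].
  - unfold X. lra.
  - rewrite frakF_1. apply Rmult_le_0_r; lra.
  - exists z. split; lra.
Qed.

Lemma frakFinv_spec y : 1 <= y -> 1 <= frakFinv y /\ frakF (frakFinv y) = y.
Proof.
  intros Hy. apply (epsilon_spec (inhabits 0) (fun x => 1 <= x /\ frakF x = y)), frakF_surj, Hy.
Qed.

Lemma ln_near1 r : Rabs (r - 1) <= 1/2 -> Rabs (ln r) <= 2 * Rabs (r - 1).
Proof.
  intros H. apply Rabs_le_between in H. assert (Hr : 0 < r) by lra.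
  pose proof (exp_ineq1_le (ln r)) as U. rewrite exp_ln in U by exact Hr.
  pose proof (exp_ineq1_le (ln (/ r))) as L. rewrite exp_ln, ln_Rinv in L by (auto with real).
  assert (1 - / r = (r - 1) / r) by (field; lra).
  apply Rabs_le. destruct (Rle_lt_dec 1 r).
  - rewrite Rabs_right by lra. split; [|lra].
    assert (0 <= (r - 1) / r) by (apply Rdiv_le_0_compat; lra). lra.
  - rewrite Rabs_left by lra. split; [|lra].
    assert ((r - 1) / r >= 2 * (r - 1)).
    { apply Rle_ge. apply (Rmult_le_reg_r r); [exact Hr|].
      replace ((r - 1) / r * r) with (r - 1) by (field; lra). nra. }
    lra.
Qed.

(* [frakF x = rho (phi^x + e)] with [|e| <= 1], so [logphi (y / rho)] is
   [frakFinv y] plus [logphi (1 + e / phi^x)]. *)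
Lemma frakFinv_asymptotic eta : 0 < eta -> exists Y0, forall y, Y0 <= y ->
  Rabs (frakFinv y - logphi (y / rho)) < eta.
Proof.
  intros Heta. pose proof rho_gt_half. pose proof ln_phi_pos.
  set (G := 2 + 2 / (eta * ln phi)).
  assert (HG : 0 < 2 / (eta * ln phi)) by (apply Rdiv_lt_0_compat; nra).
  exists (rho * (G + 1)). intros y Hy.
  assert (Hy1 : 1 <= y) by (unfold G in *; nra).
  destruct (frakFinv_spec y Hy1) as [Hx1 Hx2].
  set (x := frakFinv y) in *.
  destruct (frakF_decomp x ltac:(lra)) as [e [He HF]].
  set (g := Rpower phi x) in *.
  assert (Hg : g = y / rho - e) by (rewrite <- Hx2, HF; field; lra).
  assert (HyG : G + 1 <= y / rho).
  { apply (Rmult_le_reg_l rho); [lra|]. replace (rho * (y / rho)) with y by (field; lra). lra. }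
  apply Rabs_le_between in He.
  assert (HgG : G <= g) by lra.
  assert (Hgpos : 0 < g) by (unfold G in *; lra).
  assert (Hdiff : x - logphi (y / rho) = - (ln ((g + e) / g) / ln phi)).
  { rewrite <- (logphi_Rpower x). fold g. unfold logphi.
    replace (y / rho) with (g + e) by lra. rewrite ln_div by (unfold G in *; lra). field. lra. }
  assert (Hratio : Rabs ((g + e) / g - 1) <= / g).
  { replace ((g + e) / g - 1) with (e * / g) by (field; lra).
    rewrite Rabs_mult, (Rabs_right (/ g)) by (apply Rle_ge, Rlt_le, Rinv_0_lt_compat; lra).
    assert (Rabs e <= 1) by (apply Rabs_le; lra).
    pose proof (Rinv_0_lt_compat g Hgpos). nra. }
  assert (Hinv : / g <= 1/2).
  { apply (Rmult_le_reg_r g); [lra|]. rewrite Rinv_l by lra. unfold G in *. lra. }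
  assert (Hsmall : 2 * / g < eta * ln phi).
  { apply (Rmult_lt_reg_r g); [lra|]. rewrite Rmult_assoc, Rinv_l by lra.
    apply (Rmult_lt_reg_l (/ (eta * ln phi))); [apply Rinv_0_lt_compat; nra|].
    replace (/ (eta * ln phi) * (eta * ln phi * g)) with g by (field; lra).
    unfold G, Rdiv in HgG. lra. }
  pose proof (ln_near1 ((g + e) / g) ltac:(lra)) as Hln.
  rewrite Hdiff, Rabs_Ropp. unfold Rdiv at 1. rewrite Rabs_mult, Rabs_inv, (Rabs_right (ln phi)) by lra.
  apply (Rmult_lt_reg_r (ln phi)); [lra|]. rewrite Rmult_assoc, Rinv_l, Rmult_1_r by lra. lra.
Qed.

(** * Frequencies of leading blocks *)

Lemma nonpos_of_bounded_multiples s X C : (forall j, rho * phi ^ (s + j) * X <= C) -> X <= 0.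
Proof.
  intros H. destruct (Rle_lt_dec X 0) as [?|HX]; [assumption|exfalso].
  pose proof phi_bounds. pose proof rho_pos. pose proof (Rle_abs C).
  destruct (Pow_x_infinity phi ltac:(rewrite Rabs_right; lra) ((Rabs C + 1) / rho / X)) as [N HN].
  specialize (H N). specialize (HN (s + N)%nat ltac:(lia)).
  rewrite Rabs_right in HN by (apply Rle_ge, pow_le; lra). apply Rge_le in HN.
  apply (Rmult_le_compat_l (rho * X)) in HN; [|nra].
  replace (rho * X * ((Rabs C + 1) / rho / X)) with (Rabs C + 1) in HN by (field; lra).
  nra.
Qed.

Section LeadingBlock.

Variables (s : nat) (b : list bool).
Hypothesis Hs : (2 <= s)%nat.
Hypothesis Hb : inFs s b.

Lemma block_start_approx_tilde j :
  Rabs (INR (block_start (tilde s b) j) - rho * phi ^ (s + j) * hat_value (tilde s b)) <= INR s.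
Proof.
  destruct (tilde_block_start s b Hs Hb) as [Hl _].
  pose proof (block_start_approx (tilde s b) j) as H. rewrite Hl in H. exact H.
Qed.

Lemma block_start_approx_b j :
  Rabs (INR (block_start b j) - rho * phi ^ (s + j) * hat_value b) <= INR s.
Proof.
  destruct (inFs_block s b ltac:(lia) Hb) as [_ [Hl _]].
  pose proof (block_start_approx b j) as H. rewrite Hl in H. exact H.
Qed.

(* [V_b(j) <= V_b~(j) <= F_(s+j+1)] at every scale [j]; divide by
   [rho phi^(s+j)] and let [j] grow. *)
Lemma hat_value_tilde_bounds :
  1 <= hat_value b <= hat_value (tilde s b) /\ hat_value (tilde s b) <= phi.
Proof.
  pose proof (inFs_block s b ltac:(lia) Hb) as Hblk.
  destruct (tilde_block_start s b Hs Hb) as [_ Ht].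
  split; [split; [apply hat_value_ge1, Hblk|]|].
  - cut (hat_value b - hat_value (tilde s b) <= 0); [lra|].
    apply (nonpos_of_bounded_multiples s _ (2 * INR s)). intros j.
    pose proof (block_start_approx_b j) as H1. pose proof (block_start_approx_tilde j) as H2.
    apply Rabs_le_between in H1, H2.
    assert (INR (block_start b j) <= INR (block_start (tilde s b) j)) by (apply le_INR; rewrite Ht; lia).
    lra.
  - cut (hat_value (tilde s b) - phi <= 0); [lra|].
    apply (nonpos_of_bounded_multiples s _ (INR s + 1)). intros j.
    pose proof (block_start_approx_tilde j) as H2. apply Rabs_le_between in H2.
    pose proof (block_end_le s b j Hblk) as T. rewrite <- Ht in T. apply le_INR in T.
    pose proof (fibF_approx (S (s + j))) as B. apply Rabs_def2 in B.
    replace (rho * phi ^ S (s + j)) with (rho * phi ^ (s + j) * phi) in B by (cbn; ring).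
    lra.
Qed.

Lemma LB_frac_window :
  frac_window scaled_log (fun m => LB s m b)
    (logphi (hat_value b)) (logphi (hat_value (tilde s b)) - logphi (hat_value b)).
Proof.
  pose proof hat_value_tilde_bounds.
  pose proof (inFs_block s b ltac:(lia) Hb) as Hblk.
  destruct (tilde_block_start s b Hs Hb) as [_ Ht].
  apply (block_frac_window s _ _ (block_start b) (block_start (tilde s b))); try lra.
  - exact block_start_approx_b.
  - exact block_start_approx_tilde.
  - intros m. rewrite (LB_iff_block_interval s b m Hblk).
    split; intros [j Hj]; exists j; rewrite Ht in *; lia.
Qed.

End LeadingBlock.

Section GeometricSequence.

Variables (K : nat -> nat) (a b : R).
Hypothesis Ha : 0 < a.
Hypothesis Hb : 0 < b.
Hypothesis HK : forall n, (1 <= n)%nat -> (0 < K n)%nat.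
Hypothesis Hlim : is_lim_seq (fun n => INR (K n) / (a * b ^ n)) 1.
Hypothesis Hirr : irrational (logphi b).

Lemma ratio_near1 eps : 0 < eps ->
  eventually (fun n => Rabs (INR (K n) / (a * b ^ n) - 1) < eps).
Proof. intros Heps. exact (proj2 (is_lim_seq_spec _ _) Hlim (mkposreal eps Heps)). Qed.

Lemma K_decomp n : INR (K n) = INR (K n) / (a * b ^ n) * (a * b ^ n).
Proof. field. split; [apply pow_nonzero|]; lra. Qed.

Lemma base_gt1 : 1 < b.
Proof.
  destruct (Rlt_le_dec 1 b) as [H|H]; [exact H|exfalso].
  destruct (Req_dec b 1) as [E|E].
  - apply Hirr. exists 0%Q. rewrite E. unfold logphi, Q2R. rewrite ln_1. cbn. field.
    pose proof ln_phi_pos. lra.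
  - destruct (pow_lt_1_zero b ltac:(rewrite Rabs_right; lra) (1 / (2 * a))
      ltac:(apply Rdiv_lt_0_compat; lra)) as [N1 HN1].
    destruct (ratio_near1 (1/2) ltac:(lra)) as [N2 HN2].
    set (n := S (N1 + N2)).
    specialize (HN1 n ltac:(unfold n; lia)). specialize (HN2 n ltac:(unfold n; lia)).
    rewrite Rabs_right in HN1 by (apply Rle_ge, pow_le; lra). apply Rabs_def2 in HN2.
    assert (HKn : 1 <= INR (K n)) by (apply (le_INR 1), HK; unfold n; lia).
    assert (Hbn : 0 < a * b ^ n) by (apply Rmult_lt_0_compat; [|apply pow_lt]; lra).
    assert (a * b ^ n < 1/2).
    { apply (Rmult_lt_compat_l a) in HN1; [|exact Ha].
      replace (a * (1 / (2 * a))) with (1/2) in HN1 by (field; lra). lra. }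
    rewrite K_decomp in HKn. nra.
Qed.

Lemma K_unbounded_R M : eventually (fun n => M <= INR (K n)).
Proof.
  pose proof base_gt1. pose proof (Rle_abs M).
  destruct (ratio_near1 (1/2) ltac:(lra)) as [N1 HN1].
  destruct (Pow_x_infinity b ltac:(rewrite Rabs_right; lra) (2 * Rabs M / a)) as [N2 HN2].
  exists (N1 + N2)%nat. intros n Hn.
  specialize (HN1 n ltac:(lia)). apply Rabs_def2 in HN1.
  specialize (HN2 n ltac:(lia)). rewrite Rabs_right in HN2 by (apply Rle_ge, pow_le; lra).
  apply Rge_le, (Rmult_le_compat_l a) in HN2; [|lra].
  replace (a * (2 * Rabs M / a)) with (2 * Rabs M) in HN2 by (field; lra).
  rewrite K_decomp.
  assert (0 <= (INR (K n) / (a * b ^ n) - 1/2) * (a * b ^ n))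
    by (apply Rmult_le_pos; [lra|apply Rmult_le_pos; [lra|apply pow_le; lra]]).
  lra.
Qed.

Lemma K_unbounded N : eventually (fun n => (N <= K n)%nat).
Proof.
  destruct (K_unbounded_R (INR N)) as [M HM]. exists M. intros n Hn. apply INR_le, HM, Hn.
Qed.

Lemma K_S_unbounded N : eventually (fun k => (N <= K (S k))%nat).
Proof. destruct (K_unbounded N) as [M HM]. exists M. intros k Hk. apply HM. lia. Qed.

Lemma scaled_log_K_near_linear :
  near_linear (fun n => scaled_log (K n)) (logphi b) (logphi (a / rho)).
Proof.
  pose proof ln_phi_pos. pose proof rho_pos.
  apply is_lim_seq_spec. intros eps. pose proof (cond_pos eps).
  destruct (ratio_near1 (Rmin (1/2) (eps * ln phi / 2)) ltac:(apply Rmin_glb_lt; nra)) as [N HN].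
  exists N. intros n Hn. specialize (HN n Hn).
  pose proof (Rmin_l (1/2) (eps * ln phi / 2)). pose proof (Rmin_r (1/2) (eps * ln phi / 2)).
  set (r := INR (K n) / (a * b ^ n)) in *.
  assert (Hr : 0 < r) by (apply Rabs_def2 in HN; lra).
  assert (Hbn : 0 < b ^ n) by (apply pow_lt, Hb).
  assert (E : scaled_log (K n) - (INR n * logphi b + logphi (a / rho)) = ln r / ln phi).
  { unfold scaled_log. rewrite K_decomp. fold r.
    replace (r * (a * b ^ n) / rho) with (r * (a / rho * b ^ n)) by (field; lra).
    assert (0 < a / rho) by (apply Rdiv_lt_0_compat; lra).
    rewrite (logphi_mult r), (logphi_mult (a / rho)) by (lra || (apply Rmult_lt_0_compat; lra)).
    unfold logphi. rewrite ln_pow by exact Hb. field. lra. }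
  rewrite Rminus_0_r, E. unfold Rdiv. rewrite Rabs_mult, Rabs_inv, (Rabs_right (ln phi)) by lra.
  apply (Rmult_lt_reg_r (ln phi)); [lra|]. rewrite Rmult_assoc, Rinv_l, Rmult_1_r by lra.
  pose proof (ln_near1 r ltac:(lra)). lra.
Qed.

Lemma frakFinv_K_near_linear :
  near_linear (fun n => frakFinv (INR (K n))) (logphi b) (logphi (a / rho)).
Proof.
  assert (Hasym : is_lim_seq (fun n => frakFinv (INR (K n)) - scaled_log (K n)) 0).
  { apply is_lim_seq_spec. intros eps.
    destruct (frakFinv_asymptotic eps (cond_pos eps)) as [Y0 HY0].
    destruct (K_unbounded_R Y0) as [N HN]. exists N. intros n Hn.
    rewrite Rminus_0_r. apply HY0, HN, Hn. }
  pose proof (is_lim_seq_plus' _ _ 0 0 Hasym scaled_log_K_near_linear) as H.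
  rewrite Rplus_0_l in H. eapply is_lim_seq_ext; [|exact H]. intros n. cbv beta. ring.
Qed.

Lemma equidistributed_frakFinv_K : equidistributed (fun n => frakFinv (INR (K n))).
Proof.
  intros beta Hbeta.
  apply is_lim_seq_cnt.
  apply (frac_window_density (logphi b) (logphi (a / rho) + logphi b)
           (fun k => frakFinv (INR (K (S k)))) _ 0 beta Hirr Hbeta).
  - exact (near_linear_shift _ _ _ frakFinv_K_near_linear).
  - apply frac_window_frac_le.
Qed.

Lemma LB_K_frequency s bb : (2 <= s)%nat -> inFs s bb ->
  is_lim_seq (fun n => cnt (fun k => LB s (K k) bb) n / INR n)
    (logphi (dotHat (tilde s bb) / dotHat bb)).
Proof.
  intros Hs Hin. pose proof ln_phi_pos.
  destruct (hat_value_tilde_bounds s bb Hs Hin) as [[Hb1 Hbt] Htp].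
  replace (logphi (dotHat (tilde s bb) / dotHat bb))
    with (logphi (hat_value (tilde s bb)) - logphi (hat_value bb))
    by (rewrite !dotHat_hat_value; unfold logphi; rewrite ln_div by lra; field; lra).
  apply is_lim_seq_cnt.
  apply (frac_window_density (logphi b) (logphi (a / rho) + logphi b)
           (fun k => scaled_log (K (S k))) _ (logphi (hat_value bb)) _ Hirr).
  - assert (logphi 1 = 0) by (unfold logphi; rewrite ln_1; field; lra).
    assert (logphi phi = 1) by (unfold logphi; field; lra).
    pose proof (logphi_le 1 (hat_value bb) ltac:(lra) Hb1).
    pose proof (logphi_le (hat_value bb) (hat_value (tilde s bb)) ltac:(lra) Hbt).
    pose proof (logphi_le (hat_value (tilde s bb)) phi ltac:(lra) Htp). lra.
  - exact (near_linear_shift _ _ _ scaled_log_K_near_linear).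
  - exact (frac_window_comp _ _ _ _ (fun k => K (S k)) (LB_frac_window s bb Hs Hin) K_S_unbounded).
Qed.

End GeometricSequence.

Theorem corollary4p7 (K : nat -> nat) (a b : R) :
  0 < a -> 0 < b ->
  (forall n, (1 <= n)%nat -> (0 < K n)%nat) ->
  is_lim_seq (fun n => INR (K n) / (a * b ^ n)) 1 ->
  (~ exists q : Q, logphi b = Q2R q) ->
  equidistributed (fun n => frakFinv (INR (K n))) /\
  (forall (s : nat) (bb : list bool), (2 <= s)%nat -> inFs s bb ->
     is_lim_seq
       (fun n => cnt (fun k => LB s (K k) bb) n / INR n)
       (logphi (dotHat (tilde s bb) / dotHat bb))).
Proof.
  intros Ha Hb HK Hlim Hirr. split.
  - exact (equidistributed_frakFinv_K K a b Ha Hb HK Hlim Hirr).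
  - intros s bb Hs Hin. exact (LB_K_frequency K a b Ha Hb HK Hlim Hirr s bb Hs Hin).
Qed.
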